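(* Let $\gamma:[0,1]\to[0,1]^2$ be a continuous curve with $\gamma(0)=(0,0)$, $\gamma(1)=(1,1)$, and $\pi_2\circ\gamma\in\mathcal U$. Then for each $n\in\mathbb{N}$ there exist continuous functions $y,x_1,\ldots,x_n:[0,1]\to[0,1]$ such that, with $x_0(t)\equiv 0$: (i) $(x_i(t),\,x_{i-1}(t)+y(t))\in\gamma([0,1])$ for all $t\in[0,1]$ and all $i=1,\ldots,n$; (ii) $x_i(0)=y(0)=0$ for all $i=1,\ldots,n$; (iii) $(x_n(1),\,x_{n-1}(1)+y(1))=(1,1)$.
   Context: $\pi_2(a,b)=b$ is the projection onto the $y$-axis. A function $f:[0,1]\to\mathbb{R}$ is called piecewise monotone if there is a partition of $[0,1]$ into finitely many subintervals on each of which $f$ is strictly increasing or strictly decreasing. $\mathcal U$ denotes the set of piecewise monotone continuous functions $f:[0,1]\to[0,1]$ with the property that, for every $c\in[0,1]$, the set $f^{-1}(c)$ does not contain both a local maximum point and a local minimum point of $f$. *)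

From Stdlib Require Import Reals.
Open Scope R_scope.

Definition in01 (x : R) : Prop := 0 <= x <= 1.

Definition cont01 (f : R -> R) : Prop :=
  forall x, in01 x -> forall eps, 0 < eps -> exists delta, 0 < delta /\
    forall y, in01 y -> Rabs (y - x) < delta -> Rabs (f y - f x) < eps.

Definition maps01 (f : R -> R) : Prop := forall x, in01 x -> in01 (f x).

Definition strict_incr_on (f : R -> R) (a b : R) : Prop :=
  forall x y, a <= x -> x < y -> y <= b -> f x < f y.
Definition strict_decr_on (f : R -> R) (a b : R) : Prop :=
  forall x y, a <= x -> x < y -> y <= b -> f y < f x.

Definition piecewise_monotone (f : R -> R) : Prop :=
  exists (k : nat) (a : nat -> R),
    (1 <= k)%nat /\ a 0%nat = 0 /\ a k = 1 /\
    (forall j, (j < k)%nat -> a j < a (S j)) /\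
    (forall j, (j < k)%nat ->
        strict_incr_on f (a j) (a (S j)) \/ strict_decr_on f (a j) (a (S j))).

Definition local_max_pt (f : R -> R) (p : R) : Prop :=
  in01 p /\ exists delta, 0 < delta /\
    forall y, in01 y -> Rabs (y - p) < delta -> f y <= f p.
Definition local_min_pt (f : R -> R) (p : R) : Prop :=
  in01 p /\ exists delta, 0 < delta /\
    forall y, in01 y -> Rabs (y - p) < delta -> f p <= f y.

Definition classU (f : R -> R) : Prop :=
  cont01 f /\ maps01 f /\ piecewise_monotone f /\
  forall c, in01 c ->
    ~ ((exists p, in01 p /\ f p = c /\ local_max_pt f p) /\
       (exists q, in01 q /\ f q = c /\ local_min_pt f q)).

Definition on_curve (gamma : R -> R * R) (P : R * R) : Prop :=
  exists s, in01 s /\ gamma s = P.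

From Stdlib Require Import Reals Lra Lia Psatz Rtopology ClassicalEpsilon List Arith Bool Classical.
Import ListNotations.

(* Write F = snd o gamma and G = fst o gamma. For n = 1 take y = F and x 1 = G. Given a ladder
   y, x 1, ..., x n, the function h = x n + y starts at 0 and first reaches 1 at some time s.
   The mountain climbers' theorem for F against h on [0, s] gives reparametrisations u, v with
   F o u = h o v and u 1 = 1; then G o u, together with the old functions composed with v, is a
   ladder with n + 1 rungs.

   Mountain climbers' theorem (f piecewise monotone, g merely continuous): choose levels
   0 = c 0 < ... < c r = 1 containing the values of f at its breakpoints. Between consecutive
   levels f is strictly monotone, so f becomes a nearest-neighbour walk lam on level indices;
   recording the successive level crossings of g turns g into a second such walk ell. At every
   vertex of the product of the two walks other than (0, 0) and (K, N) the admissible edges come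
   in pairs, so the trail leaving (0, 0) that always exits along the paired edge must end at
   (K, N). Each of its edges is realised by continuous paths, inverting f on a monotone piece. *)

Open Scope nat_scope.

(** * Trails in the product of two walks *)

Lemma exists_least (P : nat -> Prop) : (exists n, P n) ->
  exists n, P n /\ forall k, k < n -> ~ P k.
Proof.
  intros [n Hn]. induction n as [n IH] using (well_founded_induction lt_wf).
  destruct (classic (exists k, k < n /\ P k)) as [[k [Hk Pk]]|Hno].
  - exact (IH k Hk Pk).
  - exists n; split; auto. intros k Hk Pk; apply Hno; eauto.
Qed.

Definition nn_walk (K r : nat) (lam : nat -> nat) : Prop :=
  lam 0 = 0 /\ lam K = r /\
  (forall m, m < K -> lam (S m) = S (lam m) \/ lam m = S (lam (S m))) /\
  (forall m, m <= K -> lam m <= r).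

Lemma nn_walk_length_pos K r lam : nn_walk K r lam -> 1 <= r -> 1 <= K.
Proof. intros [H0 [HK _]] Hr. destruct K; lia. Qed.

Lemma nn_walk_neighbours K r lam m : nn_walk K r lam -> 0 < m -> m < K ->
  (lam (pred m) = S (lam m) \/ lam m = S (lam (pred m))) /\
  (lam (S m) = S (lam m) \/ lam m = S (lam (S m))).
Proof.
  intros [_ [_ [Hstep _]]] H1 H2. split.
  - destruct (Hstep (pred m) ltac:(lia)) as [E|E]; replace (S (pred m)) with m in E by lia; lia.
  - apply Hstep; lia.
Qed.

Lemma nn_walk_turn_at_extreme K r lam m : nn_walk K r lam -> 0 < m -> m < K ->
  (lam m = 0 \/ lam m = r) -> lam (pred m) = lam (S m).
Proof.
  intros HW H1 H2 E. destruct (nn_walk_neighbours K r lam m HW H1 H2) as [A B].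
  destruct HW as [_ [_ [_ Hr]]].
  pose proof (Hr (pred m) ltac:(lia)). pose proof (Hr (S m) ltac:(lia)). lia.
Qed.

Definition shift (up : bool) (m : nat) : nat := if up then S m else pred m.
Definition shiftable (K : nat) (up : bool) (m : nat) : Prop :=
  (up = false -> 1 <= m) /\ (up = true -> m < K).

Lemma shiftK K up m : shiftable K up m -> shift (negb up) (shift up m) = m.
Proof.
  unfold shiftable, shift; destruct up; simpl; intros [H1 H2]; [reflexivity|].
  specialize (H1 eq_refl); lia.
Qed.

Lemma shiftable_shift K up m : m <= K -> shiftable K up m ->
  shift up m <= K /\ shiftable K (negb up) (shift up m).
Proof.
  unfold shiftable, shift; destruct up; simpl; intros H [H1 H2];
    split; try split; intros; try discriminate; [specialize (H2 eq_refl)|..|]; lia.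
Qed.

(* A state (m, i, a, b) sits at the vertex (m, i) of the product of two walks; (a, b) is the
   direction (true = up) of the edge back along which it arrived. *)
Definition state := (nat * nat * bool * bool)%type.

Definition vertex (s : state) : nat * nat := let '(m, i, _, _) := s in (m, i).

Definition reverse (s : state) : state :=
  let '(m, i, a, b) := s in (shift a m, shift b i, negb a, negb b).

Section ProductTrail.

Variables (K N r : nat) (lam ell : nat -> nat).

Definition admissible (s : state) : Prop :=
  let '(m, i, a, b) := s in
  m <= K /\ i <= N /\ shiftable K a m /\ shiftable N b i /\
  lam m = ell i /\ lam (shift a m) = ell (shift b i).

Definition terminal (s : state) : Prop := vertex s = (0, 0) \/ vertex s = (K, N).

Definition turns_at m := (0 <? m) && (m <? K) && (lam (pred m) =? lam (S m)).
Definition crosses_at i := (0 <? i) && (i <? N) && negb (ell (pred i) =? ell (S i)).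

(* At a non-terminal vertex [redirect] is a fixed-point-free involution on the admissible
   directions, so a trail following it can neither stop nor retrace itself. *)
Definition redirect (m i : nat) (a b : bool) : bool * bool :=
  if turns_at m then (negb a, b) else if crosses_at i then (negb a, negb b) else (a, negb b).

Definition advance (s : state) : state :=
  let '(m, i, a, b) := s in
  let '(a', b') := redirect m i a b in (shift a' m, shift b' i, negb a', negb b').

(* The trail starts at (1, 1), having arrived along the edge from (0, 0). *)
Fixpoint trail (j : nat) : state :=
  match j with 0 => (1, 1, false, false) | S j => advance (trail j) end.

Lemma admissible_reverse_step m i a b : m <= K -> i <= N -> lam m = ell i ->
  shiftable K a m -> shiftable N b i -> lam (shift a m) = ell (shift b i) ->
  admissible (shift a m, shift b i, negb a, negb b).
Proof.
  intros Hm Hi Hl Ha Hb Hl2.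
  destruct (shiftable_shift K a m Hm Ha), (shiftable_shift N b i Hi Hb).
  simpl. rewrite (shiftK K a m Ha), (shiftK N b i Hb). tauto.
Qed.

Lemma reverseK s : admissible s -> reverse (reverse s) = s.
Proof.
  destruct s as [[[m i] a] b]. intros [_ [_ [Ha [Hb _]]]]. simpl.
  rewrite (shiftK K a m Ha), (shiftK N b i Hb), !negb_involutive; auto.
Qed.

Lemma reverse_neq s : reverse s <> s.
Proof. destruct s as [[[m i] a] b]. simpl. intro E; inversion E. destruct a; discriminate. Qed.

Lemma redirectK m i a b :
  redirect m i (fst (redirect m i a b)) (snd (redirect m i a b)) = (a, b).
Proof.
  unfold redirect. destruct (turns_at m), (crosses_at i); simpl; rewrite ?negb_involutive; auto.
Qed.

Lemma redirect_neq m i a b : redirect m i a b <> (a, b).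
Proof. unfold redirect. destruct (turns_at m), (crosses_at i), a, b; simpl; discriminate. Qed.

Lemma advance_neq_reverse s : advance s <> reverse s.
Proof.
  destruct s as [[[m i] a] b]. simpl. pose proof (redirect_neq m i a b).
  destruct (redirect m i a b) as [x y]. intro E. inversion E.
  apply H. destruct x, y, a, b; simpl in *; congruence.
Qed.

Hypotheses (Hlam : nn_walk K r lam) (Hell : nn_walk N r ell) (Hr : 1 <= r).

Lemma turns_atP m : turns_at m = true <-> 0 < m < K /\ lam (pred m) = lam (S m).
Proof.
  unfold turns_at. rewrite !andb_true_iff, !Nat.ltb_lt, Nat.eqb_eq. tauto.
Qed.

Lemma crosses_atP i : crosses_at i = true <-> 0 < i < N /\ ell (pred i) <> ell (S i).
Proof.
  unfold crosses_at. rewrite !andb_true_iff, !Nat.ltb_lt, negb_true_iff, Nat.eqb_neq. tauto.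
Qed.

Lemma interior_of_no_turn m i a b : admissible (m, i, a, b) -> ~ terminal (m, i, a, b) ->
  turns_at m = false -> 0 < i < N.
Proof.
  intros [Hm [Hi [_ [_ [Hl _]]]]] HT Ef. unfold terminal in HT; simpl in HT.
  pose proof Hlam as [F0 [FK _]]. pose proof Hell as [G0 [GK _]].
  assert (Hnt : ~ (0 < m < K /\ lam (pred m) = lam (S m)))
    by (intros H; apply turns_atP in H; congruence).
  split.
  - destruct (Nat.eq_dec i 0) as [->|]; [|lia]. exfalso. rewrite G0 in Hl.
    destruct (Nat.eq_dec m 0) as [->|]; [tauto|]. destruct (Nat.eq_dec m K) as [->|]; [lia|].
    apply Hnt; split; [lia|]. apply (nn_walk_turn_at_extreme K r lam m); auto; lia.
  - destruct (Nat.eq_dec i N) as [->|]; [|lia]. exfalso. rewrite GK in Hl.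
    destruct (Nat.eq_dec m K) as [->|]; [tauto|]. destruct (Nat.eq_dec m 0) as [->|]; [lia|].
    apply Hnt; split; [lia|]. apply (nn_walk_turn_at_extreme K r lam m); auto; lia.
Qed.

Lemma redirect_admissible m i a b : admissible (m, i, a, b) -> ~ terminal (m, i, a, b) ->
  let ab := redirect m i a b in
  shiftable K (fst ab) m /\ shiftable N (snd ab) i /\
  lam (shift (fst ab) m) = ell (shift (snd ab) i).
Proof.
  intros HV HT. pose proof HV as [Hm [Hi [Ha [Hb [Hl Hl2]]]]].
  pose proof Hlam as [F0 [FK [_ Fr]]]. pose proof Hell as [G0 [GK [_ Gr]]].
  unfold redirect. destruct (turns_at m) eqn:Ef; [|destruct (crosses_at i) eqn:Eg].
  - apply turns_atP in Ef as [Hm0 E]. simpl; split; [|split; auto].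
    + unfold shiftable; split; intros; lia.
    + rewrite <- Hl2. destruct a; simpl; auto.
  - apply crosses_atP in Eg as [Hi0 E].
    pose proof (nn_walk_neighbours N r ell i Hell ltac:(lia) ltac:(lia)) as [GA GB].
    assert (Hm0 : m <> 0) by (intros ->; rewrite F0 in Hl; lia).
    assert (HmK : m <> K).
    { intros ->. rewrite FK in Hl.
      pose proof (Gr (pred i) ltac:(lia)). pose proof (Gr (S i) ltac:(lia)). lia. }
    assert (E4 : lam (pred m) <> lam (S m)).
    { intro E'. assert (turns_at m = true) by (apply turns_atP; split; [lia|auto]). congruence. }
    pose proof (nn_walk_neighbours K r lam m Hlam ltac:(lia) ltac:(lia)) as [FA FB].
    simpl; split; [|split]; try (unfold shiftable; split; intros; lia).
    destruct a, b; simpl in *; lia.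
  - destruct (interior_of_no_turn m i a b HV HT Ef) as [Hi0 HiN].
    assert (E4 : ell (pred i) = ell (S i)).
    { destruct (Nat.eq_dec (ell (pred i)) (ell (S i))) as [|Hne]; auto.
      assert (crosses_at i = true) by (apply crosses_atP; split; [lia|auto]). congruence. }
    simpl; split; [exact Ha|split].
    + unfold shiftable; split; intros; lia.
    + rewrite Hl2. destruct b; simpl; auto.
Qed.

Lemma advance_admissible s : admissible s -> ~ terminal s -> admissible (advance s).
Proof.
  destruct s as [[[m i] a] b]. intros HV HT.
  destruct (redirect_admissible m i a b HV HT) as [A [B C]].
  simpl. destruct (redirect m i a b) as [a' b'] eqn:E. simpl in *.
  destruct HV as [Hm [Hi [_ [_ [Hl _]]]]].
  apply admissible_reverse_step; auto.
Qed.

Lemma reverse_advance m i a b : admissible (m, i, a, b) -> ~ terminal (m, i, a, b) ->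
  reverse (advance (m, i, a, b)) =
  (m, i, fst (redirect m i a b), snd (redirect m i a b)).
Proof.
  intros HV HT. destruct (redirect_admissible m i a b HV HT) as [A [B _]].
  simpl. destruct (redirect m i a b) as [a' b'] eqn:E. simpl in *.
  rewrite (shiftK K a' m A), (shiftK N b' i B), !negb_involutive. reflexivity.
Qed.

Lemma vertex_reverse_advance s : admissible s -> ~ terminal s ->
  vertex (reverse (advance s)) = vertex s.
Proof. destruct s as [[[m i] a] b]. intros HV HT. rewrite reverse_advance; auto. Qed.

Lemma advance_inj s1 s2 : admissible s1 -> ~ terminal s1 -> admissible s2 -> ~ terminal s2 ->
  advance s1 = advance s2 -> s1 = s2.
Proof.
  destruct s1 as [[[m1 i1] a1] b1], s2 as [[[m2 i2] a2] b2]. intros V1 T1 V2 T2 E.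
  pose proof (reverse_advance _ _ _ _ V1 T1) as B1.
  pose proof (reverse_advance _ _ _ _ V2 T2) as B2.
  rewrite E, B2 in B1. inversion B1; subst m2 i2.
  pose proof (redirectK m1 i1 a1 b1) as R1. pose proof (redirectK m1 i1 a2 b2) as R2.
  destruct (redirect m1 i1 a1 b1), (redirect m1 i1 a2 b2). simpl in *. subst.
  rewrite R1 in R2. inversion R2; subst; reflexivity.
Qed.

Lemma advance_reverse_advance s : admissible s -> ~ terminal s ->
  advance (reverse (advance s)) = reverse s.
Proof.
  destruct s as [[[m i] a] b]. intros HV HT. rewrite (reverse_advance m i a b HV HT). simpl.
  pose proof (redirectK m i a b) as R.
  destruct (redirect m i a b) as [x y]. simpl in *. rewrite R. reflexivity.
Qed.

Lemma trail_admissible T : (forall j, j < T -> ~ terminal (trail j)) ->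
  forall j, j <= T -> admissible (trail j).
Proof.
  intros HT j. induction j; intros Hj.
  - pose proof (nn_walk_length_pos K r lam Hlam Hr).
    pose proof (nn_walk_length_pos N r ell Hell Hr).
    destruct Hlam as [F0 [_ [Fa _]]], Hell as [G0 [_ [Ga _]]].
    destruct (Fa 0 ltac:(lia)), (Ga 0 ltac:(lia));
      simpl; unfold shiftable; repeat split; intros; try lia; discriminate.
  - apply advance_admissible; [apply IHj; lia|apply HT; lia].
Qed.

Lemma trail_injective B : (forall j, j <= B -> ~ terminal (trail j)) ->
  forall p q, p < q -> q <= B -> trail p <> trail q.
Proof.
  intros HT.
  assert (HV : forall j, j <= B -> admissible (trail j))
    by (apply trail_admissible; intros; apply HT; lia).
  induction p; intros q Hpq HqB E; destruct q as [|q]; try lia; simpl in E.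
  - apply (HT q ltac:(lia)). left.
    rewrite <- (vertex_reverse_advance (trail q)); [|apply HV; lia|apply HT; lia].
    rewrite <- E. reflexivity.
  - apply advance_inj in E; [|apply HV; lia|apply HT; lia|apply HV; lia|apply HT; lia].
    exact (IHp q ltac:(lia) ltac:(lia) E).
Qed.

Definition all_states : list state :=
  list_prod (list_prod (list_prod (seq 0 (S K)) (seq 0 (S N))) [true; false]) [true; false].

Lemma in_all_states s : admissible s -> In s all_states.
Proof.
  destruct s as [[[m i] a] b]. intros [Hm [Hi _]].
  repeat apply in_prod; try (apply in_seq; lia); [destruct a|destruct b]; simpl; auto.
Qed.

Lemma length_all_states : length all_states = 4 * (S K * S N).
Proof. unfold all_states, state. rewrite !length_prod, !length_seq. simpl. lia. Qed.

(* Pigeonhole: before a terminal state the trail visits distinct admissible states, of which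
   there are at most 4 (K + 1) (N + 1). *)
Lemma trail_reaches_terminal : exists j, terminal (trail j).
Proof.
  set (B := 4 * (S K * S N)).
  destruct (classic (exists j, j <= B /\ terminal (trail j))) as [[j [_ Hj]]|Hno]; [eauto|].
  exfalso.
  assert (HT : forall j, j <= B -> ~ terminal (trail j)) by (intros j Hj Ht; apply Hno; eauto).
  set (l := map trail (seq 0 (S B))).
  assert (HL : length l = S B) by (unfold l; rewrite length_map, length_seq; auto).
  assert (ND : NoDup l).
  { unfold l. apply NoDup_map_NoDup_ForallPairs; [|apply seq_NoDup].
    intros p q Hp Hq E. apply in_seq in Hp, Hq.
    destruct (Nat.lt_trichotomy p q) as [H|[H|H]]; auto; exfalso.
    - apply (trail_injective B HT p q H ltac:(lia) E).
    - apply (trail_injective B HT q p H ltac:(lia)); auto. }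
  assert (INC : incl l all_states).
  { intros s Hs. unfold l in Hs. apply in_map_iff in Hs as [j [<- Hj]]. apply in_seq in Hj.
    apply in_all_states, (trail_admissible B); [intros; apply HT; lia|lia]. }
  pose proof (NoDup_incl_length ND INC). rewrite HL, length_all_states in H. unfold B in H. lia.
Qed.

(* A trail that returned to the origin would be its own reversal, which fails in the middle. *)
Lemma trail_avoids_origin T : 0 < T -> (forall j, j < T -> ~ terminal (trail j)) ->
  vertex (trail T) <> (0, 0).
Proof.
  intros T0 HT H0.
  pose proof (trail_admissible T HT) as HV.
  assert (Eend : trail T = reverse (trail 0)).
  { pose proof (HV T ltac:(lia)) as V. destruct (trail T) as [[[m i] a] b]. simpl in H0, V |- *.
    inversion H0; subst m i. destruct V as [_ [_ [[Ha1 _] [[Hb1 _] _]]]].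
    destruct a; [|specialize (Ha1 eq_refl); lia]. destruct b; [|specialize (Hb1 eq_refl); lia].
    reflexivity. }
  assert (Pal : forall j, j <= T -> trail j = reverse (trail (T - j))).
  { induction j; intros Hj.
    - rewrite Nat.sub_0_r, Eend, (reverseK _ (HV 0 ltac:(lia))); reflexivity.
    - simpl. rewrite IHj by lia. replace (T - j) with (S (T - S j)) by lia. simpl.
      apply advance_reverse_advance; [apply HV; lia|apply HT; lia]. }
  destruct (Nat.Even_or_Odd T) as [[h Hh]|[h Hh]].
  - pose proof (Pal h ltac:(lia)) as E. replace (T - h) with h in E by lia.
    exact (reverse_neq (trail h) (eq_sym E)).
  - pose proof (Pal (S h) ltac:(lia)) as E. replace (T - S h) with h in E by lia.
    exact (advance_neq_reverse (trail h) E).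
Qed.

Lemma trail_reaches_end : exists T,
  (forall j, j <= T -> admissible (trail j)) /\
  (forall j, j < T -> ~ terminal (trail j)) /\ vertex (trail T) = (K, N).
Proof.
  destruct (exists_least _ trail_reaches_terminal) as [T [HTT HT]].
  exists T; split; [apply trail_admissible; auto|split; auto].
  destruct HTT as [H0|]; auto. exfalso.
  destruct T as [|T]; [discriminate|].
  exact (trail_avoids_origin (S T) ltac:(lia) HT H0).
Qed.

End ProductTrail.

Open Scope R_scope.

(** * Real functions on [0, 1] *)

Definition between (x y z : R) := Rmin x y <= z <= Rmax x y.

Lemma between_le x y z : x <= y -> x <= z <= y -> between x y z.
Proof. unfold between, Rmin, Rmax; destruct (Rle_dec x y); lra. Qed.

Lemma between_ge x y z : y <= x -> y <= z <= x -> between x y z.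
Proof. unfold between, Rmin, Rmax; destruct (Rle_dec x y); lra. Qed.

Lemma between_sym x y z : between x y z -> between y x z.
Proof. unfold between, Rmin, Rmax. destruct (Rle_dec x y), (Rle_dec y x); lra. Qed.

Definition strict_mono_on (f : R -> R) (a b : R) : Prop :=
  strict_incr_on f a b \/ strict_decr_on f a b.

Section StrictMonotonicity.

Variable f : R -> R.

Lemma strict_incr_on_le a b x y : strict_incr_on f a b -> a <= x -> x <= y -> y <= b -> f x <= f y.
Proof. intros H Ha Hxy Hb. destruct (Req_dec x y) as [->|]; [lra|]. left; apply H; lra. Qed.

Lemma strict_incr_on_inj a b x y : strict_incr_on f a b ->
  a <= x <= b -> a <= y <= b -> f x = f y -> x = y.
Proof.
  intros H Hx Hy E. destruct (Rtotal_order x y) as [h|[h|h]]; auto.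
  - specialize (H x y ltac:(lra) h ltac:(lra)); lra.
  - specialize (H y x ltac:(lra) h ltac:(lra)); lra.
Qed.

Lemma strict_incr_on_reflect_lt a b x y : strict_incr_on f a b ->
  a <= x <= b -> a <= y <= b -> f x < f y -> x < y.
Proof.
  intros H Hx Hy E. destruct (Rlt_le_dec x y); auto.
  pose proof (strict_incr_on_le a b y x H ltac:(lra) r ltac:(lra)); lra.
Qed.

Lemma strict_decr_on_opp a b : strict_decr_on f a b -> strict_incr_on (fun x => - f x) a b.
Proof. intros H x y ? ? ?; specialize (H x y); lra. Qed.

Lemma strict_decr_on_inj a b x y : strict_decr_on f a b ->
  a <= x <= b -> a <= y <= b -> f x = f y -> x = y.
Proof.
  intros H Hx Hy E. destruct (Rtotal_order x y) as [h|[h|h]]; auto.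
  - specialize (H x y ltac:(lra) h ltac:(lra)); lra.
  - specialize (H y x ltac:(lra) h ltac:(lra)); lra.
Qed.

Lemma strict_mono_on_inj a b x y : strict_mono_on f a b ->
  a <= x <= b -> a <= y <= b -> f x = f y -> x = y.
Proof. intros [H|H]; [apply strict_incr_on_inj|apply strict_decr_on_inj]; auto. Qed.

Lemma strict_incr_on_sub A B a b : strict_incr_on f A B -> A <= a -> b <= B -> strict_incr_on f a b.
Proof. intros H Ha Hb x y ? ? ?; apply H; lra. Qed.

Lemma strict_decr_on_sub A B a b : strict_decr_on f A B -> A <= a -> b <= B -> strict_decr_on f a b.
Proof. intros H Ha Hb x y ? ? ?; apply H; lra. Qed.

Lemma strict_incr_on_union x y z :
  strict_incr_on f x y -> strict_incr_on f y z -> strict_incr_on f x z.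
Proof.
  intros H1 H2 s t Hs Hst Ht.
  destruct (Rle_dec t y); [apply H1; lra|]. destruct (Rle_dec y s); [apply H2; lra|].
  apply Rlt_trans with (f y); [apply H1|apply H2]; lra.
Qed.

Lemma strict_decr_on_union x y z :
  strict_decr_on f x y -> strict_decr_on f y z -> strict_decr_on f x z.
Proof.
  intros H1 H2 s t Hs Hst Ht.
  destruct (Rle_dec t y); [apply H1; lra|]. destruct (Rle_dec y s); [apply H2; lra|].
  apply Rlt_trans with (f y); [apply H2|apply H1]; lra.
Qed.

Lemma strict_mono_on_incr x y : x < y -> strict_mono_on f x y -> f x < f y -> strict_incr_on f x y.
Proof. intros Hxy [H|H] E; auto. specialize (H x y ltac:(lra) Hxy ltac:(lra)). lra. Qed.

Lemma strict_mono_on_decr x y : x < y -> strict_mono_on f x y -> f y < f x -> strict_decr_on f x y.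
Proof. intros Hxy [H|H] E; auto. specialize (H x y ltac:(lra) Hxy ltac:(lra)). lra. Qed.

End StrictMonotonicity.

(* Composing with [clamp01] extends a function on [0, 1] to all of R, which gives access to
   Stdlib's [continuity], [IVT_cor] and [Heine]. *)
Definition clamp01 (x : R) : R := Rmax 0 (Rmin 1 x).

Lemma clamp01_in x : in01 (clamp01 x).
Proof. unfold clamp01, in01, Rmax, Rmin.
  destruct (Rle_dec 1 x); destruct (Rle_dec 0 _); lra. Qed.

Lemma clamp01_id x : in01 x -> clamp01 x = x.
Proof. unfold clamp01, in01, Rmax, Rmin; intros.
  destruct (Rle_dec 1 x); destruct (Rle_dec 0 _); lra. Qed.

Lemma clamp01_dist x y : Rabs (clamp01 y - clamp01 x) <= Rabs (y - x).
Proof. unfold clamp01, Rmax, Rmin.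
  destruct (Rle_dec 1 x); destruct (Rle_dec 1 y);
  repeat match goal with |- context [Rle_dec ?a ?b] => destruct (Rle_dec a b) end;
  unfold Rabs; repeat match goal with |- context [Rcase_abs ?a] => destruct (Rcase_abs a) end;
  lra.
Qed.

Lemma continuity_clamp01 f : cont01 f -> continuity (fun x => f (clamp01 x)).
Proof.
  intros Hf x. unfold continuity_pt, continue_in, limit1_in, limit_in; simpl; unfold R_dist.
  intros eps Heps.
  destruct (Hf (clamp01 x) (clamp01_in x) eps Heps) as [d [Hd H]].
  exists d; split; auto. intros y [_ Hy].
  apply H. apply clamp01_in. pose proof (clamp01_dist x y). lra.
Qed.

Lemma cont01_const c : cont01 (fun _ => c).
Proof. intros x _ e He; exists 1; split; [lra|]; intros; rewrite Rminus_diag, Rabs_R0; lra. Qed.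

Lemma cont01_id : cont01 (fun t => t).
Proof. intros x _ e He; exists e; split; auto. Qed.

Lemma cont01_plus f g : cont01 f -> cont01 g -> cont01 (fun t => f t + g t).
Proof.
  intros Hf Hg x Hx e He.
  destruct (Hf x Hx (e/2)) as [d1 [Hd1 H1]]; [lra|].
  destruct (Hg x Hx (e/2)) as [d2 [Hd2 H2]]; [lra|].
  exists (Rmin d1 d2); split; [apply Rmin_pos; auto|].
  intros y Hy Hyx. pose proof (Rmin_l d1 d2). pose proof (Rmin_r d1 d2).
  specialize (H1 y Hy ltac:(lra)). specialize (H2 y Hy ltac:(lra)).
  replace (f y + g y - (f x + g x)) with ((f y - f x) + (g y - g x)) by ring.
  eapply Rle_lt_trans; [apply Rabs_triang|]. lra.
Qed.

Lemma cont01_scale k f : cont01 f -> cont01 (fun t => k * f t).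
Proof.
  intros Hf x Hx e He.
  destruct (Hf x Hx (e / (Rabs k + 1))) as [d [Hd H]].
  { apply Rdiv_lt_0_compat; auto. pose proof (Rabs_pos k); lra. }
  exists d; split; auto. intros y Hy Hyx. specialize (H y Hy Hyx).
  replace (k * f y - k * f x) with (k * (f y - f x)) by ring.
  rewrite Rabs_mult. pose proof (Rabs_pos k).
  apply Rle_lt_trans with (Rabs k * (e / (Rabs k + 1))); [apply Rmult_le_compat_l; lra|].
  apply Rlt_le_trans with ((Rabs k + 1) * (e / (Rabs k + 1))).
  - apply Rmult_lt_compat_r; [apply Rdiv_lt_0_compat|]; lra.
  - right; field; lra.
Qed.

Lemma cont01_ext f g : cont01 f -> (forall t, in01 t -> f t = g t) -> cont01 g.
Proof. intros Hf He x Hx e Hep. destruct (Hf x Hx e Hep) as [d [Hd H]].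
  exists d; split; auto; intros y Hy Hyx. rewrite <- !He by auto. auto. Qed.

Lemma cont01_opp f : cont01 f -> cont01 (fun t => - f t).
Proof. intros H. apply cont01_ext with (fun t => (-1) * f t).
  apply cont01_scale; auto. intros; ring. Qed.

Lemma cont01_comp f h : cont01 f -> cont01 h -> maps01 h -> cont01 (fun t => f (h t)).
Proof.
  intros Hf Hh Hm x Hx e He.
  destruct (Hf (h x) (Hm x Hx) e He) as [d1 [Hd1 H1]].
  destruct (Hh x Hx d1 Hd1) as [d2 [Hd2 H2]].
  exists d2; split; [auto|]. intros y Hy Hyx. apply H1; auto.
Qed.

Lemma cont01_ivt f a b c : cont01 f -> 0 <= a -> a <= b -> b <= 1 ->
  (f a <= c <= f b \/ f b <= c <= f a) -> exists z, a <= z <= b /\ f z = c.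
Proof.
  intros Hf Ha Hab Hb Hc.
  assert (HF : continuity (fun x => f (clamp01 x) - c)).
  { apply continuity_minus; [apply continuity_clamp01; auto|].
    apply continuity_const. intros ? ?; auto. }
  assert (Hp : (fun x => f (clamp01 x) - c) a * (fun x => f (clamp01 x) - c) b <= 0).
  { simpl. rewrite !clamp01_id by (unfold in01; lra).
    destruct Hc; nra. }
  destruct (IVT_cor _ a b HF Hab Hp) as [z [Hz Hz2]].
  exists z; split; auto. rewrite clamp01_id in Hz2 by (unfold in01; lra). lra.
Qed.

Lemma cont01_neq_near g s c : cont01 g -> in01 s -> g s <> c ->
  exists d, 0 < d /\ forall t, in01 t -> Rabs (t - s) < d -> g t <> c.
Proof.
  intros Hg Hs Hne. destruct (Hg s Hs (Rabs (g s - c))) as [d [Hd H]].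
  { apply Rabs_pos_lt; lra. }
  exists d; split; auto. intros t Ht Htd E. specialize (H t Ht Htd). rewrite E in H.
  rewrite <- Rabs_Ropp in H. replace (- (c - g s)) with (g s - c) in H by ring. lra.
Qed.

Lemma last_hit g a b c : cont01 g -> 0 <= a -> a <= b -> b <= 1 -> g a = c ->
  exists s, a <= s <= b /\ g s = c /\ forall t, s < t <= b -> g t <> c.
Proof.
  intros Hg Ha Hab Hb Hc.
  set (E := fun t => a <= t <= b /\ g t = c).
  assert (Hbd : bound E). { exists b; intros x [Hx _]; lra. }
  assert (Hne : exists x, E x). { exists a; split; auto; lra. }
  destruct (completeness E Hbd Hne) as [s [Hs1 Hs2]].
  assert (Has : a <= s). { apply Hs1; split; auto; lra. }
  assert (Hsb : s <= b). { apply Hs2; intros x [Hx _]; lra. }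
  exists s; split; [lra|split].
  - destruct (Req_dec (g s) c) as [|Hne']; auto.
    destruct (cont01_neq_near g s c Hg ltac:(unfold in01; lra) Hne') as [d [Hd H]].
    exfalso.
    assert (Hub : is_upper_bound E (s - d/2)).
    { intros x Hx. destruct (Rle_dec x (s - d/2)); auto.
      exfalso. assert (x <= s) by (apply Hs1; auto). destruct Hx as [Hx1 Hx2].
      apply (H x); [unfold in01; lra|apply Rabs_def1; lra|auto]. }
    specialize (Hs2 _ Hub). lra.
  - intros t Ht E'. assert (t <= s) by (apply Hs1; split; auto; lra). lra.
Qed.

Lemma first_hit g a b c : cont01 g -> 0 <= a -> a <= b -> b <= 1 -> g b = c ->
  exists s, a <= s <= b /\ g s = c /\ forall t, a <= t < s -> g t <> c.
Proof.
  intros Hg Ha Hab Hb Hc.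
  set (E := fun t => a <= t <= b /\ forall t', a <= t' < t -> g t' <> c).
  assert (Hbd : bound E). { exists b; intros x [Hx _]; lra. }
  assert (Hne : exists x, E x). { exists a; split; [lra|]. intros; lra. }
  destruct (completeness E Hbd Hne) as [s [Hs1 Hs2]].
  assert (Has : a <= s). { apply Hs1; split; [lra|]. intros; lra. }
  assert (Hsb : s <= b). { apply Hs2; intros x [Hx _]; lra. }
  assert (Hbefore : forall t, a <= t < s -> g t <> c).
  { intros t Ht. destruct (classic (exists x, E x /\ t < x)) as [[x [[_ Hx] Htx]]|Hn];
      [apply Hx; lra|].
    exfalso. assert (Hub : is_upper_bound E t).
    { intros x Hx. destruct (Rle_dec x t); auto. exfalso; apply Hn; exists x; split; auto; lra. }
    specialize (Hs2 _ Hub); lra. }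
  exists s; split; [lra|split; auto].
  destruct (Req_dec (g s) c) as [|Hne']; auto. exfalso.
  destruct (Req_dec s b) as [->|Hsb']; [contradiction|].
  destruct (cont01_neq_near g s c Hg ltac:(unfold in01; lra) Hne') as [d [Hd H]].
  assert (HE : E (Rmin (s + d/2) b)).
  { pose proof (Rmin_l (s + d/2) b). pose proof (Rmin_r (s + d/2) b).
    split; [unfold Rmin; destruct (Rle_dec (s+d/2) b); lra|].
    intros t' Ht'. destruct (Rlt_le_dec t' s); [apply Hbefore; lra|].
    apply H; [unfold in01; lra|apply Rabs_def1; lra]. }
  specialize (Hs1 _ HE). unfold Rmin in Hs1; destruct (Rle_dec (s+d/2) b); lra.
Qed.

Lemma cont01_uniform g : cont01 g -> forall e, 0 < e -> exists d, 0 < d /\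
  forall x y, in01 x -> in01 y -> Rabs (x - y) < d -> Rabs (g x - g y) < e.
Proof.
  intros Hg e He.
  assert (H := Heine (fun x => g (clamp01 x)) (fun c => 0 <= c <= 1) (compact_P3 0 1)
    (fun x _ => continuity_clamp01 g Hg x)).
  destruct (H (mkposreal e He)) as [[d Hd] Hu]. simpl in Hu.
  exists d; split; auto. intros x y Hx Hy Hxy.
  specialize (Hu x y Hx Hy Hxy). rewrite !clamp01_id in Hu; auto.
Qed.

Definition linpath (x y t : R) := x + t * (y - x).

Lemma cont01_linpath x y : cont01 (linpath x y).
Proof.
  apply cont01_ext with (fun t => x + (y - x) * t); [|intros; unfold linpath; ring].
  apply cont01_plus; [apply cont01_const|apply cont01_scale, cont01_id].
Qed.

Lemma linpath_between x y t : in01 t -> between x y (linpath x y t).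
Proof. unfold in01, between, linpath, Rmin, Rmax; intros Ht.
  destruct (Rle_dec x y); split; nra. Qed.

Lemma maps01_linpath x y : in01 x -> in01 y -> maps01 (linpath x y).
Proof. intros Hx Hy t Ht. pose proof (linpath_between x y t Ht).
  unfold in01, between, Rmin, Rmax in *; destruct (Rle_dec x y); lra. Qed.

Lemma linpath0 x y : linpath x y 0 = x. Proof. unfold linpath; ring. Qed.
Lemma linpath1 x y : linpath x y 1 = y. Proof. unfold linpath; ring. Qed.

(* u is f^-1 o h; moving u by eps / 2 would move f o u = h by at least min m1 m2. *)
Lemma strict_incr_on_lift f a b h : cont01 f -> 0 <= a -> a < b -> b <= 1 ->
  strict_incr_on f a b -> cont01 h -> (forall t, in01 t -> f a <= h t <= f b) ->
  exists u, cont01 u /\ forall t, in01 t -> a <= u t <= b /\ f (u t) = h t.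
Proof.
  intros Hf Ha Hab Hb Hm Hh Hr.
  assert (Hex : forall t, exists x, in01 t -> a <= x <= b /\ f x = h t).
  { intros t. destruct (classic (in01 t)) as [Ht|Ht].
    - destruct (cont01_ivt f a b (h t) Hf Ha (Rlt_le _ _ Hab) Hb (or_introl (Hr t Ht)))
        as [z Hz].
      exists z; auto.
    - exists a; intros; contradiction. }
  apply choice in Hex. destruct Hex as [u Hu]. exists u; split; [|auto].
  intros t0 Ht0 eps Heps.
  destruct (Hu t0 Ht0) as [Hx0 Hfx0]. set (x0 := u t0) in *.
  set (m1 := if Rle_dec (x0 + eps/2) b then f (x0 + eps/2) - f x0 else 1).
  set (m2 := if Rle_dec a (x0 - eps/2) then f x0 - f (x0 - eps/2) else 1).
  assert (Hm1 : 0 < m1).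
  { unfold m1; destruct (Rle_dec (x0 + eps/2) b); [|lra].
    assert (f x0 < f (x0 + eps/2)) by (apply Hm; lra). lra. }
  assert (Hm2 : 0 < m2).
  { unfold m2; destruct (Rle_dec a (x0 - eps/2)); [|lra].
    assert (f (x0 - eps/2) < f x0) by (apply Hm; lra). lra. }
  destruct (Hh t0 Ht0 (Rmin m1 m2) (Rmin_pos _ _ Hm1 Hm2)) as [d [Hd Hdd]].
  exists d; split; auto. intros t Ht Htd.
  specialize (Hdd t Ht Htd). destruct (Hu t Ht) as [Hx Hfx].
  rewrite <- Hfx, <- Hfx0 in Hdd.
  pose proof (Rmin_l m1 m2). pose proof (Rmin_r m1 m2).
  apply Rabs_def1.
  - destruct (Rlt_le_dec (u t) (x0 + eps/2)); [lra|].
    exfalso. unfold m1 in *. destruct (Rle_dec (x0 + eps / 2) b); [|lra].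
    pose proof (strict_incr_on_le f a b (x0 + eps/2) (u t) Hm ltac:(lra) r ltac:(lra)).
    apply Rabs_def2 in Hdd. lra.
  - destruct (Rlt_le_dec (x0 - eps/2) (u t)); [lra|].
    exfalso. unfold m2 in *. destruct (Rle_dec a (x0 - eps / 2)); [|lra].
    pose proof (strict_incr_on_le f a b (u t) (x0 - eps/2) Hm ltac:(lra) r ltac:(lra)).
    apply Rabs_def2 in Hdd. lra.
Qed.

Lemma strict_decr_on_lift f a b h : cont01 f -> 0 <= a -> a < b -> b <= 1 ->
  strict_decr_on f a b -> cont01 h -> (forall t, in01 t -> f b <= h t <= f a) ->
  exists u, cont01 u /\ forall t, in01 t -> a <= u t <= b /\ f (u t) = h t.
Proof.
  intros Hf Ha Hab Hb Hm Hh Hr.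
  destruct (strict_incr_on_lift (fun x => - f x) a b (fun t => - h t)) as [u [Hu1 Hu2]];
    auto using cont01_opp, strict_decr_on_opp.
  - intros t Ht; specialize (Hr t Ht); lra.
  - exists u; split; auto. intros t Ht; destruct (Hu2 t Ht); split; auto; lra.
Qed.

Lemma strict_mono_on_lift f a b h : cont01 f -> 0 <= a -> a < b -> b <= 1 ->
  strict_mono_on f a b -> cont01 h -> (forall t, in01 t -> between (f a) (f b) (h t)) ->
  exists u, cont01 u /\ forall t, in01 t -> a <= u t <= b /\ f (u t) = h t.
Proof.
  intros Hf Ha Hab Hb [Hm|Hm] Hh Hr.
  - apply strict_incr_on_lift; auto. assert (f a < f b) by (apply Hm; lra).
    intros t Ht; specialize (Hr t Ht). unfold between, Rmin, Rmax in Hr.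
    destruct (Rle_dec (f a) (f b)); lra.
  - apply strict_decr_on_lift; auto. assert (f b < f a) by (apply Hm; lra).
    intros t Ht; specialize (Hr t Ht). unfold between, Rmin, Rmax in Hr.
    destruct (Rle_dec (f a) (f b)); lra.
Qed.

Definition concat (u1 u2 : R -> R) (t : R) : R :=
  if Rle_dec t (1/2) then u1 (2*t) else u2 (2*t - 1).

Lemma concat0 u1 u2 : concat u1 u2 0 = u1 0.
Proof. unfold concat; destruct (Rle_dec 0 (1/2)); [f_equal; ring|lra]. Qed.
Lemma concat1 u1 u2 : concat u1 u2 1 = u2 1.
Proof. unfold concat; destruct (Rle_dec 1 (1/2)); [lra|f_equal; ring]. Qed.

Lemma cont01_concat u1 u2 : cont01 u1 -> cont01 u2 -> u1 1 = u2 0 -> cont01 (concat u1 u2).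
Proof.
  intros H1 H2 E x Hx e He.
  destruct (Rtotal_order x (1/2)) as [Hlt|[Heq|Hgt]].
  - destruct (H1 (2*x) ltac:(unfold in01 in *; lra) e He) as [d [Hd H]].
    exists (Rmin (d/2) (1/2 - x)); split; [apply Rmin_pos; lra|].
    intros y Hy Hyx. pose proof (Rmin_l (d/2) (1/2 - x)). pose proof (Rmin_r (d/2) (1/2 - x)).
    apply Rabs_def2 in Hyx.
    unfold concat. destruct (Rle_dec y (1/2)); [|lra]. destruct (Rle_dec x (1/2)); [|lra].
    apply H; [unfold in01 in *; lra|apply Rabs_def1; lra].
  - subst x. destruct (H1 1 ltac:(unfold in01; lra) e He) as [d1 [Hd1 Ha]].
    destruct (H2 0 ltac:(unfold in01; lra) e He) as [d2 [Hd2 Hb]].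
    exists (Rmin d1 d2 / 2); split; [pose proof (Rmin_pos _ _ Hd1 Hd2); lra|].
    intros y Hy Hyx. pose proof (Rmin_l d1 d2). pose proof (Rmin_r d1 d2).
    apply Rabs_def2 in Hyx.
    unfold concat. destruct (Rle_dec (1/2) (1/2)); [|lra].
    replace (2 * (1/2)) with 1 by field.
    destruct (Rle_dec y (1/2)).
    + apply Ha; [unfold in01 in *; lra|apply Rabs_def1; lra].
    + rewrite E. apply Hb; [unfold in01 in *; lra|apply Rabs_def1; lra].
  - destruct (H2 (2*x-1) ltac:(unfold in01 in *; lra) e He) as [d [Hd H]].
    exists (Rmin (d/2) (x - 1/2)); split; [apply Rmin_pos; lra|].
    intros y Hy Hyx. pose proof (Rmin_l (d/2) (x - 1/2)). pose proof (Rmin_r (d/2) (x-1/2)).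
    apply Rabs_def2 in Hyx.
    unfold concat. destruct (Rle_dec y (1/2)); [lra|]. destruct (Rle_dec x (1/2)); [lra|].
    apply H; [unfold in01 in *; lra|apply Rabs_def1; lra].
Qed.

Lemma maps01_concat u1 u2 : maps01 u1 -> maps01 u2 -> maps01 (concat u1 u2).
Proof.
  intros H1 H2 t Ht. unfold concat, in01 in *.
  destruct (Rle_dec t (1/2)); [apply H1|apply H2]; unfold in01; lra.
Qed.

Lemma concat_rel (f g : R -> R) u1 v1 u2 v2 :
  (forall t, in01 t -> f (u1 t) = g (v1 t)) -> (forall t, in01 t -> f (u2 t) = g (v2 t)) ->
  forall t, in01 t -> f (concat u1 u2 t) = g (concat v1 v2 t).
Proof.
  intros H1 H2 t Ht. unfold concat.
  destruct (Rle_dec t (1/2)); [apply H1|apply H2]; unfold in01 in *; lra.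
Qed.

(** * Level walks *)

Definition levels (c : nat -> R) (r : nat) : Prop :=
  (1 <= r)%nat /\ c 0%nat = 0 /\ c r = 1 /\ forall l, (l < r)%nat -> c l < c (S l).

Lemma levels_min_gap c r : levels c r ->
  exists d, 0 < d /\ forall l, (l < r)%nat -> d <= c (S l) - c l.
Proof.
  intros [_ [_ [_ H]]]. clear -H. induction r as [|r IH].
  - exists 1; split; [lra|]; intros; lia.
  - destruct IH as [d [Hd Hd2]]; [intros; apply H; lia|].
    exists (Rmin d (c (S r) - c r)); split.
    + apply Rmin_pos; auto. specialize (H r ltac:(lia)); lra.
    + intros l Hl. destruct (Nat.eq_dec l r) as [->|]; [apply Rmin_r|].
      eapply Rle_trans; [apply Rmin_l|]. apply Hd2; lia.
Qed.

Section Levels.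

Variables (c : nat -> R) (r : nat).
Hypothesis Hc : levels c r.

Lemma levels_lt l1 l2 : (l1 < l2)%nat -> (l2 <= r)%nat -> c l1 < c l2.
Proof.
  destruct Hc as [_ [_ [_ H]]]. intros H12 H2. induction l2 as [|l2 IH]; [lia|].
  destruct (Nat.eq_dec l1 l2) as [->|]; [apply H; lia|].
  apply Rlt_trans with (c l2); [apply IH|apply H]; lia.
Qed.

Lemma levels_le l1 l2 : (l1 <= l2)%nat -> (l2 <= r)%nat -> c l1 <= c l2.
Proof.
  intros H1 H2. destruct (Nat.eq_dec l1 l2) as [->|]; [lra|].
  left; apply levels_lt; lia.
Qed.

Lemma levels_inj l1 l2 : (l1 <= r)%nat -> (l2 <= r)%nat -> c l1 = c l2 -> l1 = l2.
Proof.
  intros H1 H2 E. destruct (Nat.lt_trichotomy l1 l2) as [H|[H|H]]; auto.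
  - pose proof (levels_lt l1 l2 H H2); lra.
  - pose proof (levels_lt l2 l1 H H1); lra.
Qed.

End Levels.

Section LevelCrossings.

Variables (g : R -> R) (c : nat -> R) (r : nat).
Hypotheses (Hg : cont01 g) (Hgm : maps01 g) (Hg1 : g 1 = 1) (Hc : levels c r).

Lemma first_neighbour_level t0 l : in01 t0 -> g t0 = c l -> (l < r)%nat ->
  exists t1 l', t0 < t1 <= 1 /\ (l' = S l \/ l = S l') /\ g t1 = c l' /\
    (forall t, t0 <= t < t1 -> g t <> c (S l)) /\
    ((0 < l)%nat -> forall t, t0 <= t < t1 -> g t <> c (l - 1)%nat).
Proof.
  intros Ht0 Hgt0 Hlr. unfold in01 in *.
  pose proof Hc as [Hr [Hc0 [Hcr Hinc]]].
  assert (Hup : c l < c (S l)) by (apply Hinc; auto).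
  assert (HS1 : c (S l) <= 1) by (rewrite <- Hcr; apply (levels_le c r); auto; lia).
  destruct (cont01_ivt g t0 1 (c (S l)) Hg ltac:(lra) ltac:(lra) ltac:(lra) ltac:(left; lra))
    as [b [Hb Hgb]].
  destruct (first_hit g t0 b (c (S l)) Hg ltac:(lra) ltac:(lra) ltac:(lra) Hgb)
    as [tp [Htp [Hgtp Hntp]]].
  destruct (classic ((0 < l)%nat /\ exists z, t0 <= z <= tp /\ g z = c (l - 1)%nat))
    as [[Hl0 [z [Hz Hgz]]]|Hno].
  - destruct (first_hit g t0 z (c (l-1)%nat) Hg ltac:(lra) ltac:(lra) ltac:(lra) Hgz)
      as [tm [Htm [Hgtm Hntm]]].
    assert (Hlow : c (l - 1)%nat < c l) by (apply (levels_lt c r); [exact Hc|lia|lia]).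
    exists tm, (l - 1)%nat. split; [|split; [right; lia|split; [auto|split]]].
    + split; [|lra]. destruct (Req_dec tm t0) as [E|]; [subst tm; lra|lra].
    + intros t Ht. apply Hntp; lra.
    + intros _ t Ht. apply Hntm; lra.
  - exists tp, (S l). split; [|split; [left; auto|split; [auto|split]]].
    + split; [|lra]. destruct (Req_dec tp t0) as [E|]; [subst tp; lra|lra].
    + intros t Ht. apply Hntp; lra.
    + intros Hl0 t Ht E. apply Hno; split; auto. exists t; split; auto; lra.
Qed.

Lemma next_level_hit t0 l : in01 t0 -> g t0 = c l -> (l < r)%nat ->
  exists t1 l', t0 < t1 <= 1 /\ (l' = S l \/ l = S l') /\ g t1 = c l' /\
    forall t, t0 <= t <= t1 -> c (l - 1)%nat <= g t <= c (S l).
Proof.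
  intros Ht0 Hgt0 Hlr.
  destruct (first_neighbour_level t0 l Ht0 Hgt0 Hlr) as [t1 [l' [Ht1 [Hl' [Hgt1 [NoUp NoDn]]]]]].
  unfold in01 in *. pose proof Hc as [Hr [Hc0 [Hcr Hinc]]].
  exists t1, l'. split; [lra|split; [auto|split; [auto|]]].
  intros t Ht. destruct (Req_dec t t1) as [->|Htt1].
  { rewrite Hgt1. destruct Hl' as [->| ->]; split; try lra; apply (levels_le c r); auto; lia. }
  split.
  - destruct (Nat.eq_dec l 0) as [->|Hl0]; [simpl; rewrite Hc0; apply (Hgm t); unfold in01; lra|].
    destruct (Rle_dec (c (l-1)%nat) (g t)) as [|Hlt]; auto. exfalso.
    destruct (cont01_ivt g t0 t (c (l-1)%nat) Hg ltac:(lra) ltac:(lra) ltac:(lra))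
      as [w [Hw Hgw]].
    { right. assert (c (l - 1)%nat < c l) by (apply (levels_lt c r); [exact Hc|lia|lia]). lra. }
    apply (NoDn ltac:(lia) w); auto; lra.
  - assert (c l < c (S l)) by (apply Hinc; auto).
    destruct (Rle_dec (g t) (c (S l))) as [|Hlt]; auto. exfalso.
    destruct (cont01_ivt g t0 t (c (S l)) Hg ltac:(lra) ltac:(lra) ltac:(lra) ltac:(left; lra))
      as [w [Hw Hgw]].
    apply (NoUp w); auto; lra.
Qed.

(* s is the last visit to c l before t1. *)
Lemma level_crossing t0 l : in01 t0 -> g t0 = c l -> (l < r)%nat ->
  exists t1 l' s, t0 <= s <= t1 /\ t1 <= 1 /\ (l' = S l \/ l = S l') /\
    g t1 = c l' /\ g s = c l /\
    (forall t, t0 <= t <= s -> c (l - 1)%nat <= g t <= c (S l)) /\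
    (forall t, s <= t <= t1 -> between (c l) (c l') (g t)).
Proof.
  intros Ht0 Hgt0 Hlr. unfold in01 in *.
  pose proof Hc as [Hr [Hc0 [Hcr Hinc]]].
  destruct (next_level_hit t0 l Ht0 Hgt0 Hlr) as [t1 [l' [Ht1 [Hl' [Hgt1 Hband]]]]].
  destruct (last_hit g t0 t1 (c l) Hg ltac:(lra) ltac:(lra) ltac:(lra) Hgt0) as [s [Hs [Hgs Hns]]].
  assert (Hst : s < t1).
  { destruct (Req_dec s t1) as [E|]; [|lra]. subst s. rewrite Hgt1 in Hgs.
    apply (levels_inj c r) in Hgs; auto; lia. }
  exists t1, l', s. split; [lra|split; [lra|split; [auto|split; [auto|split; [auto|split]]]]].
  { intros t Ht. apply Hband; lra. }
  intros t Ht. pose proof (Hband t ltac:(lra)) as Hin.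
  assert (Hside : forall w, t <= w <= t1 -> g w = c l -> t = s).
  { intros w Hw E. destruct (Rle_dec w s) as [|Hws]; [lra|]. exfalso. apply (Hns w); auto; lra. }
  destruct Hl' as [-> | ->].
  - assert (c l < c (S l)) by (apply Hinc; lia).
    apply between_le; [lra|]. split; [|lra].
    destruct (Rle_dec (c l) (g t)) as [|Hlt]; auto. exfalso.
    destruct (cont01_ivt g t t1 (c l) Hg ltac:(lra) ltac:(lra) ltac:(lra) ltac:(left; lra))
      as [w [Hw Hgw]].
    pose proof (Hside w Hw Hgw); subst t; lra.
  - assert (c l' < c (S l')) by (apply Hinc; lia).
    replace (S l' - 1)%nat with l' in Hin by lia.
    apply between_ge; [lra|]. split; [lra|].
    destruct (Rle_dec (g t) (c (S l'))) as [|Hlt]; auto. exfalso.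
    destruct (cont01_ivt g t t1 (c (S l')) Hg ltac:(lra) ltac:(lra) ltac:(lra) ltac:(right; lra))
      as [w [Hw Hgw]].
    pose proof (Hside w Hw Hgw); subst t; lra.
Qed.

End LevelCrossings.

(* g reaches level c (ell i) at time tau i; sig i is its last visit to that level before
   tau (i + 1). *)
Definition crossing_walk (g : R -> R) (c : nat -> R) (r : nat) (t0 : R) (l N : nat)
    (ell : nat -> nat) (tau sig : nat -> R) : Prop :=
  ell 0%nat = l /\ ell N = r /\
  (forall i, (i < N)%nat -> ell (S i) = S (ell i) \/ ell i = S (ell (S i))) /\
  (forall i, (i <= N)%nat -> (ell i <= r)%nat) /\
  tau 0%nat = t0 /\ (forall i, (i <= N)%nat -> in01 (tau i) /\ g (tau i) = c (ell i)) /\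
  (forall i, (i < N)%nat ->
     (ell i < r)%nat /\ tau i <= sig i <= tau (S i) /\ g (sig i) = c (ell i) /\
     (forall t, tau i <= t <= sig i -> c (ell i - 1)%nat <= g t <= c (S (ell i))) /\
     (forall t, sig i <= t <= tau (S i) -> between (c (ell i)) (c (ell (S i))) (g t))).

Section CrossingWalk.

Variables (g : R -> R) (c : nat -> R) (r : nat).
Hypotheses (Hg : cont01 g) (Hgm : maps01 g) (Hg1 : g 1 = 1) (Hc : levels c r).

(* Consecutive levels are at least d apart, so by uniform continuity each crossing takes
   time at least eta; hence at most M crossings fit into [t0, 1]. *)
Lemma crossing_walk_from d eta :
  0 < d -> (forall l, (l < r)%nat -> d <= c (S l) - c l) -> 0 < eta ->
  (forall x y, in01 x -> in01 y -> Rabs (x - y) < eta -> Rabs (g x - g y) < d) ->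
  forall M t0 l, in01 t0 -> g t0 = c l -> (l <= r)%nat -> 1 - t0 < INR M * eta ->
  exists N ell tau sig, crossing_walk g c r t0 l N ell tau sig.
Proof.
  intros Hd Hgap Heta Hu M. induction M as [|M IH]; intros t0 l Ht0 Hgt0 Hlr HM.
  { simpl in HM. unfold in01 in Ht0; lra. }
  destruct (Nat.eq_dec l r) as [->|Hne].
  { exists 0%nat, (fun _ => r), (fun _ => t0), (fun _ => t0).
    split; [auto|split; [auto|split; [intros; lia|split; [intros; lia|split; [auto|split]]]]].
    - intros; split; auto.
    - intros; lia. }
  destruct (level_crossing g c r Hg Hgm Hg1 Hc t0 l Ht0 Hgt0 ltac:(lia))
    as [t1 [l' [s [Hs [Ht1 [Hl' [Hgt1 [Hgs [Hlo Hband]]]]]]]]].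
  assert (Hstep : t0 + eta <= t1).
  { destruct (Rle_dec (t0 + eta) t1) as [|Hlt]; auto. exfalso.
    assert (Habs : Rabs (g t1 - g t0) < d)
      by (apply Hu; unfold in01 in *; try lra; apply Rabs_def1; lra).
    rewrite Hgt1, Hgt0 in Habs. apply Rabs_def2 in Habs.
    destruct Hl' as [-> | ->];
      [specialize (Hgap l ltac:(lia))|specialize (Hgap l' ltac:(lia))]; lra. }
  rewrite S_INR in HM.
  destruct (IH t1 l' ltac:(unfold in01 in *; lra) Hgt1 ltac:(lia) ltac:(lra))
    as [N [ell [tau [sig [E0 [EN [Eadj [Er [T0 [Tin Tst]]]]]]]]]].
  exists (S N), (fun i => match i with 0%nat => l | S j => ell j end),
    (fun i => match i with 0%nat => t0 | S j => tau j end),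
    (fun i => match i with 0%nat => s | S j => sig j end).
  split; [auto|split; [auto|split; [|split; [|split; [auto|split]]]]].
  - intros [|i] Hi; [rewrite E0; lia|apply Eadj; lia].
  - intros [|i] Hi; [lia|apply Er; lia].
  - intros [|i] Hi; [split; auto|apply Tin; lia].
  - intros [|i] Hi; [|apply Tst; lia].
    rewrite E0, T0. split; [lia|split; [lra|split; [auto|split; auto]]].
Qed.

Lemma crossing_walk_exists : g 0 = 0 -> exists N ell tau sig, crossing_walk g c r 0 0 N ell tau sig.
Proof.
  intros Hg0.
  destruct (levels_min_gap c r Hc) as [d [Hd Hgap]].
  destruct (cont01_uniform g Hg d Hd) as [eta [Heta Hu]].
  destruct (INR_archimed eta 1 Heta) as [M HM].
  apply (crossing_walk_from d eta Hd Hgap Heta Hu M); try lia; try lra.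
  - unfold in01; lra.
  - destruct Hc as [_ [-> _]]; auto.
Qed.

End CrossingWalk.

Lemma levels_insert c r x : levels c r -> 0 <= x <= 1 ->
  exists c' r', levels c' r' /\
    (forall l, (l <= r)%nat -> exists l', (l' <= r')%nat /\ c' l' = c l) /\
    exists l', (l' <= r')%nat /\ c' l' = x.
Proof.
  intros HL Hx. pose proof HL as [Hr [Hc0 [Hcr Hinc]]].
  destruct (classic (exists l, (l <= r)%nat /\ c l = x)) as [Hin|Hno].
  { exists c, r; split; auto; split; auto. intros l Hl; exists l; auto. }
  destruct (exists_least (fun q => (q <= r)%nat /\ x < c q)) as [q [[Hqr Hxq] Hmin]].
  { exists r; split; auto. destruct (Req_dec x 1) as [E|E]; [|lra].
    exfalso; apply Hno; exists r; split; auto; lra. }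
  assert (Hq0 : (q <> 0)%nat) by (intro; subst q; lra).
  set (L := (q - 1)%nat).
  assert (HcL : c L < x).
  { assert (c L <= x).
    { destruct (Rle_dec (c L) x); auto. exfalso. apply (Hmin L); [unfold L; lia|].
      split; [unfold L; lia|lra]. }
    destruct (Req_dec (c L) x); [|lra]. exfalso; apply Hno; exists L; split; auto. unfold L; lia. }
  assert (HqL : q = S L) by (unfold L; lia).
  rewrite HqL in Hxq, Hqr.
  set (c' := fun q => if (q <=? L)%nat then c q else if (q =? S L)%nat then x else c (q - 1)%nat).
  exists c', (S r). split; [|split].
  - split; [lia|split; [|split]].
    + unfold c'; simpl. auto.
    + unfold c'. destruct (Nat.leb_spec (S r) L), (Nat.eqb_spec (S r) (S L)); try lia.
      replace (S r - 1)%nat with r by lia. auto.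
    + intros l Hl. unfold c'.
      destruct (Nat.leb_spec l L), (Nat.leb_spec (S l) L); try lia.
      * apply Hinc; lia.
      * destruct (Nat.eqb_spec (S l) (S L)); [|lia]. replace l with L by lia. auto.
      * destruct (Nat.eqb_spec l (S L)), (Nat.eqb_spec (S l) (S L)); try lia.
        -- subst l. replace (S (S L) - 1)%nat with (S L) by lia. auto.
        -- replace (S l - 1)%nat with (S (l - 1)) by lia. apply Hinc; lia.
  - intros l Hl. destruct (Nat.leb_spec l L).
    + exists l; split; [lia|]. unfold c'. destruct (Nat.leb_spec l L); [auto|lia].
    + exists (S l); split; [lia|]. unfold c'.
      destruct (Nat.leb_spec (S l) L), (Nat.eqb_spec (S l) (S L)); try lia. f_equal; lia.
  - exists (S L); split; [lia|]. unfold c'.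
    destruct (Nat.leb_spec (S L) L); [lia|]. rewrite Nat.eqb_refl; auto.
Qed.

Lemma levels_through (v : nat -> R) (k : nat) : (forall j, (j <= k)%nat -> 0 <= v j <= 1) ->
  exists c r, levels c r /\ forall j, (j <= k)%nat -> exists l, (l <= r)%nat /\ c l = v j.
Proof.
  intros Hv.
  enough (H : forall n, (n <= S k)%nat -> exists c r, levels c r /\
            forall j, (j < n)%nat -> exists l, (l <= r)%nat /\ c l = v j).
  { destruct (H (S k) ltac:(lia)) as [c [r [HL Hc]]].
    exists c, r; split; auto. intros j Hj; apply Hc; lia. }
  induction n; intros Hn.
  - exists (fun l => if (l =? 0)%nat then 0 else 1), 1%nat. split; [|intros; lia].
    split; [lia|split; [auto|split; [auto|]]]. intros l Hl. replace l with 0%nat by lia. simpl; lra.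
  - destruct (IHn ltac:(lia)) as [c [r [HL Hcov]]].
    destruct (levels_insert c r (v n) HL (Hv n ltac:(lia))) as [c' [r' [HL' [Hmap Hx]]]].
    exists c', r'; split; auto. intros j Hj.
    destruct (Nat.eq_dec j n) as [->|]; auto.
    destruct (Hcov j ltac:(lia)) as [l [Hl Hcl]]. destruct (Hmap l Hl) as [l' [Hl' E]].
    exists l'; split; auto; congruence.
Qed.

Definition monotone_walk (f : R -> R) (c : nat -> R) (r K : nat) (lam : nat -> nat)
    (p : nat -> R) (A B : R) : Prop :=
  (1 <= K)%nat /\ (forall m, (m < K)%nat -> lam (S m) = S (lam m) \/ lam m = S (lam (S m))) /\
  (forall m, (m <= K)%nat -> (lam m <= r)%nat) /\ p 0%nat = A /\ p K = B /\
  (forall m, (m <= K)%nat -> A <= p m <= B /\ f (p m) = c (lam m)) /\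
  (forall m, (m < K)%nat -> p m < p (S m) /\ strict_mono_on f (p m) (p (S m))).

Section MonotonePiece.

Variables (f : R -> R) (c : nat -> R) (r : nat) (A B : R).
Hypotheses (Hf : cont01 f) (HA : 0 <= A) (HAB : A < B) (HB : B <= 1) (Hc : levels c r).

Lemma monotone_walk_incr al be : strict_incr_on f A B ->
  (al <= r)%nat -> (be <= r)%nat -> f A = c al -> f B = c be ->
  exists K lam p, monotone_walk f c r K lam p A B.
Proof.
  intros Hm Hal Hbe EA EB.
  assert (Hlt : (al < be)%nat).
  { destruct (Nat.lt_ge_cases al be) as [|Hge]; auto. exfalso.
    assert (f A < f B) by (apply Hm; lra). pose proof (levels_le c r Hc be al Hge Hal). lra. }
  assert (Hex : forall q, exists y, (q <= be - al)%nat -> A <= y <= B /\ f y = c (al + q)%nat).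
  { intros q. destruct (Compare_dec.le_lt_dec q (be - al)) as [Hq|Hq]; [|exists A; intros; lia].
    destruct (cont01_ivt f A B (c (al + q)%nat) Hf HA (Rlt_le _ _ HAB) HB) as [y Hy];
      [left; rewrite EA, EB; split; apply (levels_le c r); auto; lia|].
    exists y; auto. }
  apply choice in Hex. destruct Hex as [p Hp].
  exists (be - al)%nat, (fun q => (al + q)%nat), p.
  assert (P0 : p 0%nat = A).
  { destruct (Hp 0%nat ltac:(lia)) as [H1 H2].
    apply (strict_incr_on_inj f A B); [auto|auto|lra|]. rewrite H2, EA. f_equal; lia. }
  assert (PK : p (be - al)%nat = B).
  { destruct (Hp (be - al)%nat ltac:(lia)) as [H1 H2].
    apply (strict_incr_on_inj f A B); [auto|auto|lra|]. rewrite H2, EB. f_equal; lia. }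
  split; [lia|split; [intros; lia|split; [intros; lia|split; [auto|split; [auto|split]]]]].
  - intros m Hm'. apply Hp; auto.
  - intros m Hm'. destruct (Hp m ltac:(lia)) as [H1 H2], (Hp (S m) ltac:(lia)) as [H3 H4].
    assert (p m < p (S m)).
    { apply (strict_incr_on_reflect_lt f A B); auto.
      rewrite H2, H4. apply (levels_lt c r); auto; lia. }
    split; auto. left. apply (strict_incr_on_sub f A B); [exact Hm|lra|lra].
Qed.

Lemma monotone_walk_decr al be : strict_decr_on f A B ->
  (al <= r)%nat -> (be <= r)%nat -> f A = c al -> f B = c be ->
  exists K lam p, monotone_walk f c r K lam p A B.
Proof.
  intros Hm Hal Hbe EA EB.
  assert (Hlt : (be < al)%nat).
  { destruct (Nat.lt_ge_cases be al) as [|Hge]; auto. exfalso.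
    assert (f B < f A) by (apply Hm; lra). pose proof (levels_le c r Hc al be Hge Hbe). lra. }
  assert (Hex : forall q, exists y, (q <= al - be)%nat -> A <= y <= B /\ f y = c (al - q)%nat).
  { intros q. destruct (Compare_dec.le_lt_dec q (al - be)) as [Hq|Hq]; [|exists A; intros; lia].
    destruct (cont01_ivt f A B (c (al - q)%nat) Hf HA (Rlt_le _ _ HAB) HB) as [y Hy];
      [right; rewrite EA, EB; split; apply (levels_le c r); auto; lia|].
    exists y; auto. }
  apply choice in Hex. destruct Hex as [p Hp].
  exists (al - be)%nat, (fun q => (al - q)%nat), p.
  assert (P0 : p 0%nat = A).
  { destruct (Hp 0%nat ltac:(lia)) as [H1 H2].
    apply (strict_decr_on_inj f A B); [auto|auto|lra|]. rewrite H2, EA. f_equal; lia. }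
  assert (PK : p (al - be)%nat = B).
  { destruct (Hp (al - be)%nat ltac:(lia)) as [H1 H2].
    apply (strict_decr_on_inj f A B); [auto|auto|lra|]. rewrite H2, EB. f_equal; lia. }
  split; [lia|split; [intros; lia|split; [intros; lia|split; [auto|split; [auto|split]]]]].
  - intros m Hm'. apply Hp; auto.
  - intros m Hm'. destruct (Hp m ltac:(lia)) as [H1 H2], (Hp (S m) ltac:(lia)) as [H3 H4].
    assert (p m < p (S m)).
    { apply (strict_incr_on_reflect_lt (fun x => - f x) A B); auto using strict_decr_on_opp.
      rewrite H2, H4.
      assert (c (al - S m)%nat < c (al - m)%nat) by (apply (levels_lt c r); auto; lia). lra. }
    split; auto. right. apply (strict_decr_on_sub f A B); [exact Hm|lra|lra].
Qed.

End MonotonePiece.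

Lemma monotone_walk_app f c r K1 lam1 p1 K2 lam2 p2 A B C :
  monotone_walk f c r K1 lam1 p1 A B -> monotone_walk f c r K2 lam2 p2 B C ->
  lam1 K1 = lam2 0%nat -> exists K lam p, monotone_walk f c r K lam p A C.
Proof.
  intros [H1 [Ha1 [Hr1 [P01 [PK1 [Hin1 Hst1]]]]]] [H2 [Ha2 [Hr2 [P02 [PK2 [Hin2 Hst2]]]]]] E.
  set (lam := fun m => if (m <=? K1)%nat then lam1 m else lam2 (m - K1)%nat).
  set (p := fun m => if (m <=? K1)%nat then p1 m else p2 (m - K1)%nat).
  assert (L1 : forall m, (m <= K1)%nat -> lam m = lam1 m /\ p m = p1 m).
  { intros m Hm; unfold lam, p. destruct (Nat.leb_spec m K1); [auto|lia]. }
  assert (L2 : forall m, (K1 <= m)%nat -> lam m = lam2 (m - K1)%nat /\ p m = p2 (m - K1)%nat).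
  { intros m Hm; unfold lam, p. destruct (Nat.leb_spec m K1); auto.
    replace m with K1 by lia. rewrite Nat.sub_diag, E, P02, PK1; auto. }
  assert (HBC : B <= C) by (destruct (Hin2 0%nat ltac:(lia)); lra).
  assert (HAB : A <= B) by (destruct (Hin1 0%nat ltac:(lia)); lra).
  exists (K1 + K2)%nat, lam, p.
  split; [lia|split; [|split; [|split; [|split; [|split]]]]].
  - intros m Hm. destruct (Nat.lt_ge_cases m K1).
    + rewrite (proj1 (L1 m ltac:(lia))), (proj1 (L1 (S m) ltac:(lia))). apply Ha1; auto.
    + rewrite (proj1 (L2 m ltac:(lia))), (proj1 (L2 (S m) ltac:(lia))).
      replace (S m - K1)%nat with (S (m - K1)) by lia. apply Ha2; lia.
  - intros m Hm. destruct (Nat.le_ge_cases m K1).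
    + rewrite (proj1 (L1 m H)); auto.
    + rewrite (proj1 (L2 m H)); apply Hr2; lia.
  - rewrite (proj2 (L1 0%nat ltac:(lia))); auto.
  - rewrite (proj2 (L2 (K1 + K2)%nat ltac:(lia))). replace (K1 + K2 - K1)%nat with K2 by lia; auto.
  - intros m Hm. destruct (Nat.le_ge_cases m K1).
    + rewrite (proj1 (L1 m H)), (proj2 (L1 m H)). destruct (Hin1 m H); split; auto; lra.
    + rewrite (proj1 (L2 m H)), (proj2 (L2 m H)).
      destruct (Hin2 (m - K1)%nat ltac:(lia)); split; auto; lra.
  - intros m Hm. destruct (Nat.lt_ge_cases m K1).
    + rewrite (proj2 (L1 m ltac:(lia))), (proj2 (L1 (S m) ltac:(lia))). apply Hst1; auto.
    + rewrite (proj2 (L2 m ltac:(lia))), (proj2 (L2 (S m) ltac:(lia))).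
      replace (S m - K1)%nat with (S (m - K1)) by lia. apply Hst2; lia.
Qed.

Lemma monotone_walk_pieces f c r k (a : nat -> R) : levels c r -> (1 <= k)%nat -> a 0%nat = 0 ->
  (forall j, (j < k)%nat -> exists K lam p, monotone_walk f c r K lam p (a j) (a (S j))) ->
  exists K lam p, monotone_walk f c r K lam p 0 (a k).
Proof.
  intros HL Hk Ha0 Hpiece. induction k as [|k IH]; [lia|].
  destruct (Nat.eq_dec k 0) as [->|Hk0]; [rewrite <- Ha0; apply Hpiece; lia|].
  destruct (IH ltac:(lia) ltac:(intros; apply Hpiece; lia)) as [K1 [lam1 [p1 W1]]].
  destruct (Hpiece k ltac:(lia)) as [K2 [lam2 [p2 W2]]].
  apply (monotone_walk_app f c r K1 lam1 p1 K2 lam2 p2 0 (a k) (a (S k))); auto.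
  pose proof W1 as [_ [_ [Hr1 [_ [PK1 [Hin1 _]]]]]].
  pose proof W2 as [_ [_ [Hr2 [P02 [_ [Hin2 _]]]]]].
  apply (levels_inj c r HL); [apply Hr1; lia|apply Hr2; lia|].
  destruct (Hin1 K1 ltac:(lia)) as [_ E1]. destruct (Hin2 0%nat ltac:(lia)) as [_ E2].
  rewrite <- E1, <- E2, PK1, P02. auto.
Qed.

Lemma partition_points_in01 k (a : nat -> R) : a 0%nat = 0 -> a k = 1 ->
  (forall j, (j < k)%nat -> a j < a (S j)) -> forall j, (j <= k)%nat -> 0 <= a j <= 1.
Proof.
  intros Ha0 Hak Hainc.
  assert (Hlo : forall j, (j <= k)%nat -> 0 <= a j).
  { induction j; intros; [lra|].
    specialize (Hainc j ltac:(lia)); specialize (IHj ltac:(lia)); lra. }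
  assert (Hhi : forall d, (d <= k)%nat -> a (k - d)%nat <= 1).
  { induction d; intros Hd; [rewrite Nat.sub_0_r; lra|].
    specialize (Hainc (k - S d)%nat ltac:(lia)).
    replace (S (k - S d)) with (k - d)%nat in Hainc by lia. specialize (IHd ltac:(lia)); lra. }
  intros j Hj; split; auto. replace j with (k - (k - j))%nat by lia. apply Hhi; lia.
Qed.

Lemma monotone_walk_exists f : cont01 f -> maps01 f -> piecewise_monotone f ->
  f 0 = 0 -> f 1 = 1 ->
  exists c r K lam p, levels c r /\ monotone_walk f c r K lam p 0 1 /\ nn_walk K r lam.
Proof.
  intros Hf Hm [k [a [Hk [Ha0 [Hak [Hainc Hmono]]]]]] F0 F1.
  pose proof (partition_points_in01 k a Ha0 Hak Hainc) as Hain.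
  destruct (levels_through (fun j => f (a j)) k) as [c [r [HL Hcov]]];
    [intros j Hj; apply Hm, Hain; auto|].
  assert (Hpiece : forall j, (j < k)%nat ->
    exists K lam p, monotone_walk f c r K lam p (a j) (a (S j))).
  { intros j Hj. destruct (Hcov j ltac:(lia)) as [al [Hal Eal]].
    destruct (Hcov (S j) ltac:(lia)) as [be [Hbe Ebe]].
    pose proof (Hain j ltac:(lia)). pose proof (Hain (S j) ltac:(lia)). pose proof (Hainc j Hj).
    destruct (Hmono j Hj) as [Hi|Hd].
    - apply (monotone_walk_incr f c r (a j) (a (S j)) Hf ltac:(lra) ltac:(lra) ltac:(lra) HL al be);
        auto.
    - apply (monotone_walk_decr f c r (a j) (a (S j)) Hf ltac:(lra) ltac:(lra) ltac:(lra) HL al be);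
        auto. }
  destruct (monotone_walk_pieces f c r k a HL Hk Ha0 Hpiece) as [K [lam [p W]]]. rewrite Hak in W.
  exists c, r, K, lam, p. split; [auto|split; [auto|]].
  pose proof W as [HK1 [Hadj [Hr [P0 [PK [Hin _]]]]]].
  pose proof HL as [_ [Hc0 [Hcr _]]].
  split; [|split; [|split; auto]].
  - apply (levels_inj c r HL); [apply Hr; lia|lia|].
    destruct (Hin 0%nat ltac:(lia)) as [_ E]. rewrite <- E, P0, Hc0; auto.
  - apply (levels_inj c r HL); [apply Hr; lia|lia|].
    destruct (Hin K ltac:(lia)) as [_ E]. rewrite <- E, PK, Hcr; auto.
Qed.

(** * The mountain climbers' theorem *)

Definition climb_path (f g : R -> R) (P V P' V' : R) : Prop :=
  exists u v, cont01 u /\ cont01 v /\ maps01 u /\ maps01 v /\ u 0 = P /\ v 0 = V /\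
    u 1 = P' /\ v 1 = V' /\ forall t, in01 t -> f (u t) = g (v t).

Lemma climb_path_trans f g P V P' V' P'' V'' :
  climb_path f g P V P' V' -> climb_path f g P' V' P'' V'' -> climb_path f g P V P'' V''.
Proof.
  intros [u1 [v1 [Hu1 [Hv1 [Mu1 [Mv1 [U0 [V0 [U1 [V1 R1]]]]]]]]]]
         [u2 [v2 [Hu2 [Hv2 [Mu2 [Mv2 [U20 [V20 [U21 [V21 R2]]]]]]]]]].
  exists (concat u1 u2), (concat v1 v2).
  split; [apply cont01_concat; [auto|auto|congruence]|].
  split; [apply cont01_concat; [auto|auto|congruence]|].
  split; [apply maps01_concat; auto|]. split; [apply maps01_concat; auto|].
  rewrite !concat0, !concat1. repeat (split; [auto|]). apply concat_rel; auto.
Qed.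

(* Over a piece where f is strictly monotone, g can be followed along any segment whose values
   f covers, by inverting f. *)
Lemma climb_path_monotone f g A B x y P P' : cont01 f -> cont01 g ->
  0 <= A -> A < B -> B <= 1 -> strict_mono_on f A B -> in01 x -> in01 y ->
  (forall s, between x y s -> between (f A) (f B) (g s)) ->
  A <= P <= B -> f P = g x -> A <= P' <= B -> f P' = g y -> climb_path f g P x P' y.
Proof.
  intros Hf Hg HA HAB HB Hm Hx Hy Hr HP EP HP' EP'.
  destruct (strict_mono_on_lift f A B (fun t => g (linpath x y t)) Hf HA HAB HB Hm)
    as [u [Hu Hu2]].
  - apply cont01_comp; [auto|apply cont01_linpath|apply maps01_linpath; auto].
  - intros t Ht. apply Hr, linpath_between; auto.
  - assert (I0 : in01 0) by (unfold in01; lra). assert (I1 : in01 1) by (unfold in01; lra).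
    exists u, (linpath x y).
    split; [auto|split; [apply cont01_linpath|split; [|split; [apply maps01_linpath; auto|]]]].
    { intros t Ht. destruct (Hu2 t Ht). unfold in01; lra. }
    split; [|split; [apply linpath0|split; [|split; [apply linpath1|]]]].
    + destruct (Hu2 0 I0) as [A0 B0]. rewrite linpath0 in B0.
      apply (strict_mono_on_inj f A B); auto; congruence.
    + destruct (Hu2 1 I1) as [A1 B1]. rewrite linpath1 in B1.
      apply (strict_mono_on_inj f A B); auto; congruence.
    + intros t Ht. destruct (Hu2 t Ht); auto.
Qed.

Section ClimbAlongTrail.

Variables (f g : R -> R) (c : nat -> R) (r K N : nat) (lam ell : nat -> nat)
  (p tau sig : nat -> R).
Hypotheses (Hf : cont01 f) (Hg : cont01 g) (Hc : levels c r)
  (Hpw : monotone_walk f c r K lam p 0 1) (Hlam : nn_walk K r lam)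
  (Hgw : crossing_walk g c r 0 0 N ell tau sig).

(* The visits of g to level c (ell i) that bound its steps between i and its neighbours:
   sig i starts the step to i + 1, tau i ends the step from i - 1. *)
Definition g_time (b : bool) (i : nat) : R := if b then sig i else tau i.

Lemma f_monotone_step m a : (m <= K)%nat -> shiftable K a m ->
  exists A B, 0 <= A /\ A < B /\ B <= 1 /\ strict_mono_on f A B /\
    A <= p m <= B /\ A <= p (shift a m) <= B /\
    f (p m) = c (lam m) /\ f (p (shift a m)) = c (lam (shift a m)) /\
    forall z, between (c (lam m)) (c (lam (shift a m))) z -> between (f A) (f B) z.
Proof.
  intros Hm [Ha1 Ha2].
  destruct Hpw as [HK1 [Hadj [Hlr [P0 [PK [Hin Hst]]]]]].
  assert (Hq : exists q, (q < K)%nat /\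
    ((m = q /\ shift a m = S q) \/ (m = S q /\ shift a m = q))).
  { destruct a; simpl.
    - exists m; split; [apply Ha2; auto|auto].
    - exists (pred m); specialize (Ha1 eq_refl); split; [lia|right; split; lia]. }
  destruct Hq as [q [Hq Hends]].
  destruct (Hst q Hq) as [Hlt Hmono].
  destruct (Hin q ltac:(lia)) as [[A1 A2] FA]. destruct (Hin (S q) ltac:(lia)) as [[B1 B2] FB].
  exists (p q), (p (S q)).
  destruct Hends as [[-> ->]|[-> ->]];
    (split; [lra|split; [lra|split; [lra|split; [exact Hmono|]]]]);
    (split; [lra|split; [lra|split; [auto|split; [auto|]]]]);
    rewrite FA, FB; auto using between_sym.
Qed.

Lemma f_monotone_around m : (m <= K)%nat ->
  (m = 0%nat \/ ((0 < m < K)%nat /\ lam (pred m) <> lam (S m))) ->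
  exists A B, 0 <= A /\ A < B /\ B <= 1 /\ strict_mono_on f A B /\ A <= p m <= B /\
    forall z, c (lam m - 1)%nat <= z <= c (S (lam m)) -> between (f A) (f B) z.
Proof.
  intros Hm Hcase.
  pose proof Hpw as [HK1 [Hadj [Hlr [P0 [PK [Hin Hst]]]]]].
  pose proof Hc as [Hr [Hc0 [Hcr Hinc]]].
  destruct Hcase as [->|[Hm0 Hne]].
  - destruct Hlam as [L0 _].
    assert (L1 : lam 1%nat = 1%nat) by (destruct (Hadj 0%nat ltac:(lia)); lia).
    destruct (Hst 0%nat ltac:(lia)) as [Hlt Hmono].
    destruct (Hin 0%nat ltac:(lia)) as [[A1 A2] F0], (Hin 1%nat ltac:(lia)) as [[B1 B2] F1].
    exists (p 0%nat), (p 1%nat).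
    split; [lra|split; [lra|split; [lra|split; [exact Hmono|split; [lra|]]]]].
    intros z Hz. rewrite L0 in Hz. simpl in Hz. rewrite F0, F1, L0, L1.
    apply between_le; [left; apply Hinc; lia|lra].
  - destruct (nn_walk_neighbours K r lam m Hlam ltac:(lia) ltac:(lia)) as [Q1 Q2].
    destruct m as [|m]; [lia|]. simpl in *.
    destruct (Hst m ltac:(lia)) as [Hlt1 Hmono1], (Hst (S m) ltac:(lia)) as [Hlt2 Hmono2].
    destruct (Hin m ltac:(lia)) as [[A1 A2] FA], (Hin (S m) ltac:(lia)) as [[B1 B2] FB],
      (Hin (S (S m)) ltac:(lia)) as [[C1 C2] FC].
    pose proof (Hlr m ltac:(lia)). pose proof (Hlr (S m) ltac:(lia)).
    pose proof (Hlr (S (S m)) ltac:(lia)).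
    exists (p m), (p (S (S m))). split; [lra|split; [lra|split; [lra|split; [|split; [lra|]]]]];
      destruct Q1 as [Q1|Q1]; destruct Q2 as [Q2|Q2]; try lia.
    + right. apply strict_decr_on_union with (p (S m)); apply strict_mono_on_decr; auto;
        rewrite ?FA, ?FB, ?FC; apply (levels_lt c r Hc); lia.
    + left. apply strict_incr_on_union with (p (S m)); apply strict_mono_on_incr; auto;
        rewrite ?FA, ?FB, ?FC; apply (levels_lt c r Hc); lia.
    + intros z Hz. rewrite FA, FC. replace (lam (S m) - 1)%nat with (lam (S (S m))) in Hz by lia.
      rewrite <- Q1 in Hz. apply between_ge; [apply (levels_le c r Hc); lia|lra].
    + intros z Hz. rewrite FA, FC. replace (lam (S m) - 1)%nat with (lam m) in Hz by lia.
      rewrite <- Q2 in Hz. apply between_le; [apply (levels_le c r Hc); lia|lra].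
Qed.

Lemma ell_nn_walk : nn_walk N r ell.
Proof. destruct Hgw as [E0 [EN [Eadj [Er _]]]]. repeat split; auto. Qed.

Lemma sig_in01 i : (i < N)%nat -> in01 (sig i).
Proof.
  destruct Hgw as [_ [_ [_ [_ [_ [Tin Tst]]]]]]. intros Hi.
  destruct (Tst i Hi) as [_ [Hs _]].
  destruct (Tin i ltac:(lia)) as [[A B] _], (Tin (S i) ltac:(lia)) as [[C D] _].
  unfold in01; lra.
Qed.

Lemma g_band_step i b : (i <= N)%nat -> shiftable N b i ->
  let s0 := g_time b i in let s1 := g_time (negb b) (shift b i) in
  in01 s0 /\ in01 s1 /\ g s0 = c (ell i) /\ g s1 = c (ell (shift b i)) /\
  forall s, between s0 s1 s -> between (c (ell i)) (c (ell (shift b i))) (g s).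
Proof.
  intros Hi [Hb1 Hb2].
  pose proof Hgw as [_ [_ [_ [_ [_ [Tin Tst]]]]]].
  destruct b; simpl.
  - specialize (Hb2 eq_refl). destruct (Tst i Hb2) as [_ [Hs [Hgs [_ Hband]]]].
    destruct (Tin (S i) ltac:(lia)) as [Iti1 Gti1].
    split; [apply sig_in01; auto|split; [auto|split; [auto|split; [auto|]]]].
    intros s Hs'. apply Hband. unfold between, Rmin, Rmax in Hs'.
    destruct (Rle_dec (sig i) (tau (S i))); lra.
  - specialize (Hb1 eq_refl). destruct i as [|i]; [lia|]. simpl.
    destruct (Tst i ltac:(lia)) as [_ [Hs [Hgs [_ Hband]]]].
    destruct (Tin (S i) Hi) as [Iti Gti].
    split; [auto|split; [apply sig_in01; lia|split; [auto|split; [auto|]]]].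
    intros s Hs'. apply between_sym, Hband. unfold between, Rmin, Rmax in Hs'.
    destruct (Rle_dec (tau (S i)) (sig i)); lra.
Qed.

Lemma g_band_at_level i b : (i < N)%nat ->
  let s0 := g_time b i in let s1 := g_time (negb b) i in
  in01 s0 /\ in01 s1 /\ g s0 = c (ell i) /\ g s1 = c (ell i) /\
  forall s, between s0 s1 s -> c (ell i - 1)%nat <= g s <= c (S (ell i)).
Proof.
  intros Hi. pose proof Hgw as [_ [_ [_ [_ [_ [Tin Tst]]]]]].
  destruct (Tst i Hi) as [_ [Hs [Hgs [Hlo _]]]]. destruct (Tin i ltac:(lia)) as [Iti Gti].
  pose proof (sig_in01 i Hi).
  destruct b; simpl; (split; [auto|split; [auto|split; [auto|split; [auto|]]]]);
    intros s Hs'; apply Hlo; unfold between, Rmin, Rmax in Hs';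
    [destruct (Rle_dec (sig i) (tau i))|destruct (Rle_dec (tau i) (sig i))]; lra.
Qed.

Lemma climb_edge m i a b : (m <= K)%nat -> (i <= N)%nat -> lam m = ell i ->
  shiftable K a m -> shiftable N b i -> lam (shift a m) = ell (shift b i) ->
  climb_path f g 0 0 (p m) (g_time b i) ->
  climb_path f g 0 0 (p (shift a m)) (g_time (negb b) (shift b i)).
Proof.
  intros Hm Hi Hl Ha Hb Hl2 HR. apply (climb_path_trans _ _ _ _ _ _ _ _ HR).
  destruct (f_monotone_step m a Hm Ha)
    as [A [B [HA [HAB [HB [Hmono [HP [HP' [FP [FP' Hcov]]]]]]]]]].
  destruct (g_band_step i b Hi Hb) as [I0 [I1 [G0 [G1 Hband]]]].
  apply (climb_path_monotone f g A B); auto; try congruence.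
  intros s Hs. apply Hcov. rewrite Hl, Hl2. auto.
Qed.

(* Where f does not turn it covers the whole band around c (ell i), inside which g moves between
   tau i and sig i. *)
Lemma climb_loiter m i b : (m <= K)%nat -> (i < N)%nat -> lam m = ell i ->
  (m = 0%nat \/ ((0 < m < K)%nat /\ lam (pred m) <> lam (S m))) ->
  climb_path f g 0 0 (p m) (g_time b i) -> climb_path f g 0 0 (p m) (g_time (negb b) i).
Proof.
  intros Hm Hi Hl Hcase HR. apply (climb_path_trans _ _ _ _ _ _ _ _ HR).
  destruct (f_monotone_around m Hm Hcase) as [A [B [HA [HAB [HB [Hmono [HP Hcov]]]]]]].
  destruct (g_band_at_level i b Hi) as [I0 [I1 [G0 [G1 Hband]]]].
  pose proof Hpw as [_ [_ [_ [_ [_ [Hin _]]]]]]. destruct (Hin m Hm) as [_ Fm].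
  apply (climb_path_monotone f g A B); auto; try congruence.
  intros s Hs. apply Hcov. rewrite Hl. auto.
Qed.

Lemma loiter_allowed m i a b :
  admissible K N lam ell (m, i, a, b) -> ~ terminal K N (m, i, a, b) -> turns_at K lam m = false ->
  (i < N)%nat /\ (m = 0%nat \/ ((0 < m < K)%nat /\ lam (pred m) <> lam (S m))).
Proof.
  intros HV HT Hft.
  destruct (interior_of_no_turn K N r lam ell Hlam ell_nn_walk (proj1 Hc) m i a b HV HT Hft)
    as [_ HiN].
  destruct HV as [Hm [_ [_ [_ [Hl _]]]]].
  pose proof Hgw as [_ [_ [_ [_ [_ [_ Tst]]]]]]. pose proof Hlam as [_ [LK _]].
  split; [auto|].
  destruct (Nat.eq_dec m 0) as [->|]; [auto|right].
  destruct (Nat.eq_dec m K) as [->|]; [destruct (Tst i HiN) as [Hlt _]; lia|].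
  split; [lia|]. intro E. assert (turns_at K lam m = true) by (apply turns_atP; split; [lia|auto]).
  congruence.
Qed.

Definition climbed (s : state) : Prop :=
  let '(m, i, _, b) := s in climb_path f g 0 0 (p m) (g_time b i).

Lemma climbed_advance s : admissible K N lam ell s -> ~ terminal K N s ->
  climbed s -> climbed (advance K N lam ell s).
Proof.
  destruct s as [[[m i] a] b]. intros HV HT IH. simpl in IH |- *.
  pose proof (redirect_admissible K N r lam ell Hlam ell_nn_walk (proj1 Hc) m i a b HV HT) as RO.
  simpl in RO. destruct (redirect K N lam ell m i a b) as [a' b'] eqn:ER.
  simpl in RO. destruct RO as [Oa [Ob Ol]].
  pose proof HV as [Hm [Hi [_ [_ [Hl _]]]]].
  apply climb_edge; auto.
  destruct (Bool.bool_dec b b') as [<-|Hbb]; auto.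
  assert (Hft : turns_at K lam m = false).
  { destruct (turns_at K lam m) eqn:Eft; auto. unfold redirect in ER. rewrite Eft in ER.
    injection ER as _ E. congruence. }
  destruct (loiter_allowed m i a b HV HT Hft) as [HiN Hcase].
  replace b' with (negb b) by (destruct b, b'; simpl; congruence).
  apply climb_loiter; auto.
Qed.

Lemma climbed_start : f 0 = g 0 -> climbed (1%nat, 1%nat, false, false).
Proof.
  intros Hfg0. simpl.
  pose proof Hpw as [HK1 [Hadj [_ [P0 _]]]]. pose proof Hgw as [E0 [_ [Eadj [_ [T0 [Tin _]]]]]].
  pose proof Hlam as [L0 _]. pose proof Hc as [Hr _].
  pose proof (nn_walk_length_pos N r ell ell_nn_walk Hr) as HN1.
  assert (R0 : climb_path f g 0 0 (p 0%nat) (g_time false 0)).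
  { simpl. rewrite P0, T0. exists (fun _ => 0), (fun _ => 0).
    repeat (split; [apply cont01_const || (intros t Ht; unfold in01; lra) || auto|]). auto. }
  apply (climb_loiter 0 0 false) in R0; [|lia|lia|congruence|auto].
  assert (L1 : lam 1%nat = 1%nat) by (destruct (Hadj 0%nat ltac:(lia)); lia).
  assert (G1 : ell 1%nat = 1%nat) by (destruct (Eadj 0%nat ltac:(lia)); lia).
  assert (Up : forall n, (1 <= n)%nat -> shiftable n true 0) by (split; [discriminate|lia]).
  exact (climb_edge 0 0 true true ltac:(lia) ltac:(lia) ltac:(congruence) (Up K HK1) (Up N HN1)
    ltac:(simpl; congruence) R0).
Qed.

Lemma climb_to_end : f 0 = g 0 -> exists v1, climb_path f g 0 0 1 v1.
Proof.
  intros Hfg0.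
  destruct (trail_reaches_end K N r lam ell Hlam ell_nn_walk (proj1 Hc)) as [T [HV [HNT HEnd]]].
  assert (Inv : forall j, (j <= T)%nat -> climbed (trail K N lam ell j)).
  { induction j as [|j IH]; intros Hj; [apply climbed_start; auto|].
    apply climbed_advance; [apply HV|apply HNT|apply IH]; lia. }
  specialize (Inv T ltac:(lia)).
  destruct (trail K N lam ell T) as [[[m i] a] b]. simpl in HEnd, Inv. inversion HEnd; subst m i.
  pose proof Hpw as [_ [_ [_ [_ [PK _]]]]]. rewrite PK in Inv. eauto.
Qed.

End ClimbAlongTrail.

Theorem mountain_climbing f g :
  cont01 f -> maps01 f -> piecewise_monotone f -> f 0 = 0 -> f 1 = 1 ->
  cont01 g -> maps01 g -> g 0 = 0 -> g 1 = 1 -> exists v1, climb_path f g 0 0 1 v1.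
Proof.
  intros Hf Hfm Hpm F0 F1 Hg Hgm G0 G1.
  destruct (monotone_walk_exists f Hf Hfm Hpm F0 F1) as [c [r [K [lam [p [Hc [Hpw Hlam]]]]]]].
  destruct (crossing_walk_exists g c r Hg Hgm G1 Hc G0) as [N [ell [tau [sig Hgw]]]].
  apply (climb_to_end f g c r K N lam ell p tau sig); auto; congruence.
Qed.

Lemma maps01_comp f h : maps01 f -> maps01 h -> maps01 (fun t => f (h t)).
Proof. intros Hf Hh t Ht. apply Hf, Hh, Ht. Qed.

Lemma first_passage_rescale h : cont01 h -> (forall t, in01 t -> 0 <= h t) -> h 0 = 0 -> 1 <= h 1 ->
  exists s, 0 < s <= 1 /\ h s = 1 /\ maps01 (fun w => h (s * w)).
Proof.
  intros Hh Hpos H0 H1.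
  destruct (cont01_ivt h 0 1 1 Hh ltac:(lra) ltac:(lra) ltac:(lra) ltac:(left; lra))
    as [b [Hb Hhb]].
  destruct (first_hit h 0 b 1 Hh ltac:(lra) ltac:(lra) ltac:(lra) Hhb) as [s [Hs [Hhs Hbefore]]].
  assert (Hs0 : 0 < s) by (destruct (Req_dec s 0) as [E|]; [rewrite E, H0 in Hhs; lra|lra]).
  exists s. split; [lra|split; [auto|]].
  intros w Hw. unfold in01 in *. split; [apply Hpos; unfold in01; nra|].
  destruct (Req_dec (s * w) s) as [->|Hne]; [lra|].
  destruct (Rle_dec (h (s * w)) 1) as [|Hgt]; auto. exfalso.
  destruct (cont01_ivt h 0 (s * w) 1 Hh ltac:(lra) ltac:(nra) ltac:(nra) ltac:(left; lra))
    as [z [Hz Hhz]].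
  apply (Hbefore z); auto. nra.
Qed.

Lemma climb_first_passage F h :
  cont01 F -> maps01 F -> piecewise_monotone F -> F 0 = 0 -> F 1 = 1 ->
  cont01 h -> (forall t, in01 t -> 0 <= h t) -> h 0 = 0 -> 1 <= h 1 ->
  exists u ph, cont01 u /\ maps01 u /\ cont01 ph /\ maps01 ph /\ u 0 = 0 /\ ph 0 = 0 /\ u 1 = 1 /\
    forall t, in01 t -> F (u t) = h (ph t).
Proof.
  intros HF HFm Hpm F0 F1 Hh Hpos H0 H1.
  destruct (first_passage_rescale h Hh Hpos H0 H1) as [s [Hs [Hhs Mh]]].
  set (phi := fun w => s * w).
  assert (Hphi : cont01 phi) by (apply cont01_scale, cont01_id).
  assert (Mphi : maps01 phi) by (intros w Hw; unfold phi, in01 in *; nra).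
  destruct (mountain_climbing F (fun w => h (phi w)) HF HFm Hpm F0 F1)
    as [v1 [u [v [Hu [Hv [Mu [Mv [U0 [V0 [U1 [_ Rel]]]]]]]]]]].
  - apply cont01_comp; auto.
  - exact Mh.
  - unfold phi. rewrite Rmult_0_r. exact H0.
  - unfold phi. rewrite Rmult_1_r. exact Hhs.
  - exists u, (fun t => phi (v t)).
    split; [auto|split; [auto|split; [apply cont01_comp; auto|split; [apply maps01_comp; auto|]]]].
    split; [auto|split; [unfold phi; rewrite V0; ring|split; auto]].
Qed.

(** * Ladders on the curve *)

Definition ladder (gamma : R -> R * R) (n : nat) (y : R -> R) (x : nat -> R -> R) : Prop :=
  (forall t, x 0%nat t = 0) /\
  cont01 y /\ maps01 y /\
  (forall i, (1 <= i <= n)%nat -> cont01 (x i) /\ maps01 (x i)) /\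
  (forall t i, in01 t -> (1 <= i <= n)%nat ->
     on_curve gamma (x i t, x (i - 1)%nat t + y t)) /\
  (forall i, (1 <= i <= n)%nat -> x i 0 = 0) /\ y 0 = 0 /\
  (x n 1, x (n - 1)%nat 1 + y 1) = (1, 1).

Section Ladder.

Variable gamma : R -> R * R.
Let G s := fst (gamma s).
Let F s := snd (gamma s).
Hypotheses (HG : cont01 G) (HF : cont01 F) (HGm : maps01 G) (HFm : maps01 F)
  (Hg0 : gamma 0 = (0, 0)) (Hg1 : gamma 1 = (1, 1)).

Lemma on_curve_param s : in01 s -> on_curve gamma (G s, F s).
Proof. intros Hs. exists s; split; auto. unfold F, G. destruct (gamma s); auto. Qed.

Lemma ladder_one : ladder gamma 1 F (fun i t => if (i =? 0)%nat then 0 else G t).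
Proof.
  assert (G1 : G 1 = 1) by (unfold G; rewrite Hg1; auto).
  assert (F1 : F 1 = 1) by (unfold F; rewrite Hg1; auto).
  split; [auto|split; [exact HF|split; [exact HFm|split; [|split; [|split; [|split]]]]]].
  - intros [|i] Hi; [lia|split; [exact HG|exact HGm]].
  - intros t i Ht Hi. replace i with 1%nat by lia. simpl. rewrite Rplus_0_l.
    apply on_curve_param; auto.
  - intros [|i] Hi; [lia|]. unfold G. rewrite Hg0; auto.
  - unfold F. rewrite Hg0; auto.
  - simpl. rewrite Rplus_0_l, G1, F1. auto.
Qed.

(* The new rung is G o u, where u climbs F against x n + y run up to its first passage through 1. *)
Lemma ladder_succ n y x : piecewise_monotone F -> (1 <= n)%nat -> ladder gamma n y x ->
  exists y' x', ladder gamma (S n) y' x'.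
Proof.
  intros Hpm Hn [X0 [Hy [My [Hx [Hon [Hx0 [Hy0 Hend]]]]]]].
  injection Hend as Hxn1 Hxn2.
  assert (F0 : F 0 = 0) by (unfold F; rewrite Hg0; auto).
  assert (F1 : F 1 = 1) by (unfold F; rewrite Hg1; auto).
  assert (G1 : G 1 = 1) by (unfold G; rewrite Hg1; auto).
  assert (I1 : in01 1) by (unfold in01; lra).
  destruct (Hx n ltac:(lia)) as [Hxn Mxn].
  destruct (climb_first_passage F (fun t => x n t + y t) HF HFm Hpm F0 F1)
    as [u [ph [Hu [Mu [Hph [Mph [U0 [ph0 [U1 Rel]]]]]]]]].
  - apply cont01_plus; auto.
  - intros t Ht. pose proof (Mxn t Ht). pose proof (My t Ht). unfold in01 in *; lra.
  - rewrite Hx0, Hy0 by lia. lra.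
  - rewrite Hxn1. pose proof (My 1 I1). unfold in01 in *; lra.
  - exists (fun t => y (ph t)), (fun i t => if (i <=? n)%nat then x i (ph t) else G (u t)).
    split; [intros t; apply X0|].
    split; [apply cont01_comp; auto|]. split; [apply maps01_comp; auto|].
    split; [|split; [|split; [|split]]].
    + intros i Hi. destruct (Nat.leb_spec i n).
      * destruct (Hx i ltac:(lia)). split; [apply cont01_comp|apply maps01_comp]; auto.
      * split; [apply cont01_comp|apply maps01_comp]; auto.
    + intros t i Ht Hi. destruct (Nat.leb_spec i n), (Nat.leb_spec (i - 1) n); try lia.
      * apply Hon; [apply Mph; auto|lia].
      * replace (i - 1)%nat with n by lia. rewrite <- (Rel t Ht). apply on_curve_param, Mu; auto.
    + intros i Hi. destruct (Nat.leb_spec i n); [rewrite ph0; apply Hx0; lia|].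
      rewrite U0. unfold G. rewrite Hg0; auto.
    + rewrite ph0; auto.
    + destruct (Nat.leb_spec (S n) n); [lia|]. replace (S n - 1)%nat with n by lia.
      destruct (Nat.leb_spec n n); [|lia].
      rewrite <- (Rel 1 I1), U1, G1, F1. auto.
Qed.

End Ladder.

Theorem proposition1 (gamma : R -> R * R) :
  cont01 (fun s => fst (gamma s)) -> cont01 (fun s => snd (gamma s)) ->
  (forall s, in01 s -> in01 (fst (gamma s)) /\ in01 (snd (gamma s))) ->
  gamma 0 = (0, 0) -> gamma 1 = (1, 1) ->
  classU (fun s => snd (gamma s)) ->
  forall n : nat, (1 <= n)%nat ->
  exists (y : R -> R) (x : nat -> R -> R),
    (forall t, x 0%nat t = 0) /\
    cont01 y /\ maps01 y /\
    (forall i, (1 <= i <= n)%nat -> cont01 (x i) /\ maps01 (x i)) /\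
    (forall t i, in01 t -> (1 <= i <= n)%nat ->
       on_curve gamma (x i t, x (i - 1)%nat t + y t)) /\
    (forall i, (1 <= i <= n)%nat -> x i 0 = 0) /\ y 0 = 0 /\
    (x n 1, x (n - 1)%nat 1 + y 1) = (1, 1).
Proof.
  intros HG HF Hrange Hg0 Hg1 [_ [_ [Hpm _]]].
  assert (HGm : maps01 (fun s => fst (gamma s))) by (intros s Hs; apply Hrange; auto).
  assert (HFm : maps01 (fun s => snd (gamma s))) by (intros s Hs; apply Hrange; auto).
  intros n Hn. induction n as [|n IH]; [lia|].
  destruct (Nat.eq_dec n 0) as [->|Hn0].
  - eexists; eexists; apply (ladder_one gamma); auto.
  - destruct (IH ltac:(lia)) as [y [x Hl]].
    exact (ladder_succ gamma HG HF HGm HFm Hg0 Hg1 n y x Hpm ltac:(lia) Hl).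
Qed.
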